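(* Under the hypotheses of the decomposability theorem for sums (so $S_{(0)}=S_{(1)}+S_{(2)}$ is spectrally decomposable over $S_{(1)}$ with $\kappa=1$ and length $\ell$), one has $A_{0,1}(s)=0$ and $$A_{0,0}(s)=\sum_{n_1=1}^\infty\Big(-\log\Gamma(\lambda_{(1),n_1},S_{(2)})+\sum_{j=0}^{p_{(2)}}a_{(2),j,1}\lambda_{(1),n_1}^j\log\lambda_{(1),n_1}+\sum_{h=0}^\ell a_{(2),\alpha_{(2),h},0}\lambda_{(1),n_1}^{\alpha_{(2),h}}\Big)\lambda_{(1),n_1}^{-s}.$$
   Context: Gamma function of a sequence $S=\{\lambda_n\}$ of genus $\mathsf g(S)$: $\frac1{\Gamma(z,S)}=\prod_n(1+\frac z{\lambda_n})\exp(\sum_{j=1}^{\mathsf g(S)}\frac{(-1)^j}{j}\frac{z^j}{\lambda_n^j})$; $\log(-\lambda)$ is real on the negative real axis. Let $S_{(1)}$ (positive reals) and $S_{(2)}$ be totally regular sequences of spectral type with exponents $s_{(i)}$, genera $p_{(i)}$, orders $\alpha_{(i),N_{(i)}}\le0$, $\alpha_{(1),N_{(1)}}<-p_{(2)}-1$, $-\alpha_{(2),N_{(2)}}\ge s_{(1)}$, with $\log\Gamma(-\lambda,S_{(2)})=\sum_{h}a_{(2),\alpha_{(2),h},0}(-\lambda)^{\alpha_{(2),h}}+\sum_{j=0}^{p_{(2)}}a_{(2),j,1}(-\lambda)^j\log(-\lambda)+o(\cdot)$ as $\lambda\to\infty$ (totally regular: log terms only at integer $j\in[0,p_{(2)}]$).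 Let $\ell$ be the largest integer with $-\alpha_{(2),\ell}\le s_{(1)}$. For $\tilde S_{n_1}=\lambda_{(1),n_1}^{-1}\{\lambda_{(1),n_1}+\lambda_{(2),n_2}\}_{n_2}$ one has, as $n_1\to\infty$ uniformly in $\lambda$, $\log\Gamma(-\lambda,\tilde S_{n_1})=\sum_{h=0}^{\ell}\tilde\phi_{h}(\lambda)\lambda_{(1),n_1}^{\alpha_{(2),h}}+\sum_{l=0}^{p_{(2)}}\hat\phi_{l}(\lambda)\lambda_{(1),n_1}^{l}+\sum_{l=0}^{p_{(2)}}P_l(\lambda)\lambda_{(1),n_1}^l\log\lambda_{(1),n_1}+o(\lambda_{(1),n_1}^{-s_{(1)}})$ with $\tilde\phi_h(\lambda)=a_{(2),\alpha_{(2),h},0}((1-\lambda)^{\alpha_{(2),h}}-1)-\sum_{k=1}^{p_{(0)}}K_{k,h,0}(-\lambda)^k$, $\hat\phi_l(\lambda)=a_{(2),l,1}(1-\lambda)^l\log(1-\lambda)-\sum_{k=1}^{p_{(0)}}K_{k,l,2}(-\lambda)^k$, $P_l$ polynomials vanishing at $0$, $K$'s constants, $p_{(0)}=[s_{(1)}+s_{(2)}]$; these $\tilde\phi_h,\hat\phi_l$ are the functions $\phi_\sigma$ of the decomposition (with $\sigma=-\alpha_{(2),h}$, resp. $\sigma=-l$). Writing $a_{0,k,n_1}$ for the coefficient of $(-\lambda)^0\log^k(-\lambda)$ in the large-$\lambda$ expansion of $\log\Gamma(-\lambda,\tilde S_{n_1})$ and $b_{\sigma,0,k}$ for that of $(-\lambda)^0\log^k(-\lambda)$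 in the large-$\lambda$ expansion of $\phi_\sigma$, define $A_{0,k}(s)=\sum_{n_1\ge1}\big(a_{0,k,n_1}-\sum_\sigma b_{\sigma,0,k}\lambda_{(1),n_1}^{-\sigma}\big)\lambda_{(1),n_1}^{-s}$, $k=0,1$, the sum over $\sigma$ running over all the functions $\phi_\sigma$ above. *)

From Stdlib Require Import Reals Lra ClassicalEpsilon.
From Coquelicot Require Import Coquelicot.
Open Scope R_scope.

(* principal argument, with values in (-PI, PI]; Carg 0 = 0 *)
Definition Carg (z : C) : R :=
  let x := fst z in let y := snd z in
  match Rlt_dec 0 x with
  | left _ => atan (y / x)
  | right _ =>
    match Rlt_dec x 0 with
    | left _ => match Rle_dec 0 y with
                | left _ => atan (y / x) + PI
                | right _ => atan (y / x) - PI
                end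
    | right _ =>
      match Rlt_dec 0 y with
      | left _ => PI / 2
      | right _ => match Rlt_dec y 0 with
                   | left _ => - (PI / 2)
                   | right _ => 0
                   end
      end
    end
  end.

Definition Cexp (z : C) : C := (exp (fst z) * cos (snd z), exp (fst z) * sin (snd z)).

Definition Clog (z : C) : C := (ln (Cmod z), Carg z).

Definition Cpow (z : C) (a : R) : C := Cexp (RtoC a * Clog z)%C.

Fixpoint cpown (z : C) (n : nat) : C :=
  match n with O => RtoC 1 | S m => (z * cpown z m)%C end.

(* x^z for x > 0 real and z complex *)
Definition Rpow_C (x : R) (z : C) : C := Cexp (z * RtoC (ln x))%C.

Fixpoint csum (f : nat -> C) (n : nat) : C :=
  match n with O => RtoC 0 | S m => (csum f m + f m)%C end.

(* sum of a complex series (real and imaginary parts separately; the usual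
   total "junk value" convention of Coquelicot's Series if divergent) *)
Definition CSeries (u : nat -> C) : C :=
  (Series (fun n => fst (u n)), Series (fun n => snd (u n))).

Definition is_conv_exp (Sq : nat -> C) (s : R) : Prop :=
  (forall t, s < t -> ex_series (fun n => Rpower (Cmod (Sq n)) (- t))) /\
  (forall t, t < s -> ~ ex_series (fun n => Rpower (Cmod (Sq n)) (- t))).

Definition is_genus (Sq : nat -> C) (p : nat) : Prop :=
  ex_series (fun n => / (Cmod (Sq n)) ^ (S p)) /\
  (forall q, (q < p)%nat -> ~ ex_series (fun n => / (Cmod (Sq n)) ^ (S q))).

Definition genus (Sq : nat -> C) : nat :=
  epsilon (inhabits O) (fun p => is_genus Sq p).

Definition logGamma (z : C) (Sq : nat -> C) : C :=
  (- CSeries (fun n =>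
       Clog (RtoC 1 + z / Sq n) +
       csum (fun j => RtoC ((-1) ^ (S j) / INR (S j)) * cpown (z / Sq n) (S j))
            (genus Sq)))%C.

Definition in_sector (theta c : R) (z : C) : Prop :=
  Rabs (Carg (z - RtoC c)%C) <= theta / 2.

(* Totally regular sequence of spectral type, with exponent s, genus p,
   expansion exponents alpha_0 > ... > alpha_N (order alpha_N), coefficients
   a0 h = a_{alpha_h,0} and a1 j = a_{j,1} (j = 0..p):
   log Gamma(-lam,S) = sum_{h<=N} a0 h (-lam)^{alpha_h}
                       + sum_{j<=p} a1 j (-lam)^j log(-lam) + o(|lam|^{alpha_N})
   uniformly for large lam outside the sector. *)
Definition TR_spectral_type (Sq : nat -> C) (s : R) (p : nat) (N : nat)
    (alpha : nat -> R) (a0 a1 : nat -> C) : Prop :=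
  (forall n, Sq n <> RtoC 0) /\
  (forall n, Cmod (Sq n) <= Cmod (Sq (Datatypes.S n))) /\
  is_conv_exp Sq s /\ is_genus Sq p /\
  (forall i j, (i < j <= N)%nat -> alpha j < alpha i) /\
  exists theta c, 0 < theta < PI /\ 0 < c /\
    (forall n, in_sector theta c (Sq n)) /\
    forall eps, 0 < eps -> exists R0, forall lam : C,
      ~ in_sector theta c lam -> R0 < Cmod lam ->
      Cmod (logGamma (- lam)%C Sq
            - csum (fun h => a0 h * Cpow (- lam)%C (alpha h)) (Datatypes.S N)
            - csum (fun j => a1 j * cpown (- lam)%C j * Clog (- lam)%C) (Datatypes.S p))%C
        <= eps * Rpower (Cmod lam) (alpha N).

(* f(lam) = sum of terms (d0 + d1 log(-lam)) (-lam)^beta with beta > 0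
            + c1 log(-lam) + c0 + o(1)  as lam -> oo
   (tested along lam = -x, x -> +oo, where -lam = x and log(-lam) = ln x;
   these constant coefficients are uniquely determined). *)
Definition const_log_coeffs (f : C -> C) (c0 c1 : C) : Prop :=
  exists L : list (R * C * C),
    List.Forall (fun t => 0 < fst (fst t)) L /\
    is_lim (fun x => Cmod (f (RtoC (- x))
              - List.fold_right
                  (fun t acc => (snd (fst t) + snd t * RtoC (ln x))
                                * RtoC (Rpower x (fst (fst t))) + acc)%C
                  (RtoC 0) L
              - c1 * RtoC (ln x) - c0)%C)
           p_infty 0.

(* coefficient of (-lam)^0 log^k(-lam) (k = 0, 1) in the expansion of f *)
Definition coeff0 (f : C -> C) (k : nat) : C :=
  let c := epsilon (inhabits (RtoC 0, RtoC 0))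
                   (fun c : C * C => const_log_coeffs f (fst c) (snd c)) in
  match k with O => fst c | _ => snd c end.

Definition Stilde (lam1 : nat -> R) (S2 : nat -> C) (n1 : nat) : nat -> C :=
  fun n2 => ((RtoC (lam1 n1) + S2 n2) / RtoC (lam1 n1))%C.

Definition phi_tilde (p0 : nat) (alpha2 : nat -> R) (a20 : nat -> C)
    (K0 : nat -> nat -> C) (h : nat) (lam : C) : C :=
  (a20 h * (Cpow (RtoC 1 - lam) (alpha2 h) - RtoC 1)
   - csum (fun k => K0 (S k) h * cpown (- lam) (S k)) p0)%C.

Definition phi_hat (p0 : nat) (a21 : nat -> C) (K2 : nat -> nat -> C)
    (l : nat) (lam : C) : C :=
  (a21 l * cpown (RtoC 1 - lam) l * Clog (RtoC 1 - lam)
   - csum (fun k => K2 (S k) l * cpown (- lam) (S k)) p0)%C.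

(* A_{0,k}(s) = sum_{n1} ( a_{0,k,n1} - sum_sigma b_{sigma,0,k} lambda_{(1),n1}^{-sigma} )
                         lambda_{(1),n1}^{-s},
   the sigma's being sigma = -alpha_{(2),h} (h = 0..ell, function tilde phi_h)
   and sigma = -l (l = 0..p2, function hat phi_l). *)
Definition A0 (lam1 : nat -> R) (S2 : nat -> C) (p0 p2 ell : nat)
    (alpha2 : nat -> R) (a20 a21 : nat -> C) (K0 K2 : nat -> nat -> C)
    (k : nat) (s : C) : C :=
  CSeries (fun n1 =>
    (coeff0 (fun lam => logGamma (- lam)%C (Stilde lam1 S2 n1)) k
     - csum (fun h => coeff0 (phi_tilde p0 alpha2 a20 K0 h) k
                      * RtoC (Rpower (lam1 n1) (alpha2 h))) (S ell)
     - csum (fun l => coeff0 (phi_hat p0 a21 K2 l) k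
                      * RtoC (lam1 n1 ^ l)) (S p2))
    * Rpow_C (lam1 n1) (- s))%C.

From Pilot Require Import Defs.
From Stdlib Require Import Reals ZArith Lra Lia List ClassicalEpsilon.
From Coquelicot Require Import Coquelicot.
Open Scope R_scope.

(* Fix [n1] and put [l = λ_(1),n1].  Since
   [1 + l (1 + x) / μ = (1 + l / μ) (1 + x / ((l + μ) / l))], the primary factors split and
   [log Γ(x, S~_n1) = log Γ(l (1 + x), S_(2)) - log Γ(l, S_(2)) + x P(x)] with [P] a polynomial.
   Along [x -> +oo] we insert the expansion of [log Γ(·, S_(2))]: the terms [(l(1+x))^α_h] and
   [(l(1+x))^j log (l(1+x))] contribute [l^α_h] resp. [l^j] times the constant and [log x]
   coefficients of [(1+x)^α_h] resp. [(1+x)^j log (1+x)], which are those of [φ~_h] and [φ^_j]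
   up to [-a_(α_h,0)] in the constant coefficient of [φ~_h] and the extra [a_(j,1) l^j log l].
   For [h > ℓ] one has [α_h < -s_(1) <= 0], so [(1+x)^α_h] contributes nothing.  Hence the
   [log]-coefficients cancel exactly, and the constant ones leave the stated summand.
   The coefficients are well defined because an expansion
   [Σ (d0 + d1 log x) x^b + c1 log x + c0 + o(1)] with all [b > 0] is unique. *)

(** * Expansions at infinity *)

Definition vanishes_at_infty (g : R -> C) : Prop :=
  forall eps, 0 < eps -> exists M, forall x, M < x -> Cmod (g x) < eps.

(* The triple [(b, d0, d1)] encodes the term [(d0 + d1 ln x) x^b], as in [const_log_coeffs]. *)
Definition power_log_sum (L : list (R * C * C)) (x : R) : C :=
  fold_right (fun t acc => ((snd (fst t) + snd t * RtoC (ln x))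
                            * RtoC (Rpower x (fst (fst t))) + acc)%C) (RtoC 0) L.

Definition positive_exponents (L : list (R * C * C)) : Prop :=
  List.Forall (fun t => 0 < fst (fst t)) L.

Definition has_const_log_coeffs (F : R -> C) (c0 c1 : C) : Prop :=
  exists L, positive_exponents L /\
    vanishes_at_infty (fun x => F x - power_log_sum L x - c1 * RtoC (ln x) - c0)%C.

Definition has_log_expansion (F : R -> C) : Prop := exists c0 c1, has_const_log_coeffs F c0 c1.

Lemma vanishes_at_infty_is_lim (g : R -> C) :
  is_lim (fun x => Cmod (g x)) p_infty 0 <-> vanishes_at_infty g.
Proof.
  rewrite <- is_lim_spec. unfold is_lim', vanishes_at_infty. split.
  - intros H eps Heps. destruct (H (mkposreal eps Heps)) as [M HM].
    exists M. intros x Hx. specialize (HM x Hx). simpl in HM.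
    rewrite Rminus_0_r, Rabs_pos_eq in HM by apply Cmod_ge_0. exact HM.
  - intros H eps. destruct (H eps (cond_pos eps)) as [M HM].
    exists M. intros x Hx. rewrite Rminus_0_r, Rabs_pos_eq by apply Cmod_ge_0.
    apply HM; auto.
Qed.

Lemma const_log_coeffs_iff f c0 c1 :
  const_log_coeffs f c0 c1 <-> has_const_log_coeffs (fun x => f (RtoC (- x))) c0 c1.
Proof.
  unfold const_log_coeffs, has_const_log_coeffs.
  split; intros [L [HL H]]; exists L; split; auto; apply vanishes_at_infty_is_lim; exact H.
Qed.

Section VanishingAtInfinity.
Implicit Types g h : R -> C.

Lemma vanishes_at_infty_ext g h M0 :
  (forall x, M0 < x -> g x = h x) -> vanishes_at_infty g -> vanishes_at_infty h.
Proof.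
  intros E H eps He. destruct (H eps He) as [M HM]. exists (Rmax M M0).
  intros x Hx. rewrite <- E by (eapply Rle_lt_trans; [apply Rmax_r|exact Hx]).
  apply HM. eapply Rle_lt_trans; [apply Rmax_l|exact Hx].
Qed.

Lemma vanishes_at_infty_le g h M0 :
  (forall x, M0 < x -> Cmod (h x) <= Cmod (g x)) -> vanishes_at_infty g -> vanishes_at_infty h.
Proof.
  intros E H eps He. destruct (H eps He) as [M HM]. exists (Rmax M M0).
  intros x Hx. eapply Rle_lt_trans.
  - apply E. eapply Rle_lt_trans; [apply Rmax_r|exact Hx].
  - apply HM. eapply Rle_lt_trans; [apply Rmax_l|exact Hx].
Qed.

Lemma vanishes_at_infty_0 : vanishes_at_infty (fun _ => RtoC 0).
Proof. intros eps He; exists 0; intros; rewrite Cmod_0; auto. Qed.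

Lemma vanishes_at_infty_plus g h :
  vanishes_at_infty g -> vanishes_at_infty h -> vanishes_at_infty (fun x => g x + h x)%C.
Proof.
  intros Hg Hh eps He.
  destruct (Hg (eps/2)) as [M1 H1]; [lra|]. destruct (Hh (eps/2)) as [M2 H2]; [lra|].
  exists (Rmax M1 M2). intros x Hx. eapply Rle_lt_trans; [apply Cmod_triangle|].
  assert (Cmod (g x) < eps/2) by (apply H1; eapply Rle_lt_trans; [apply Rmax_l|exact Hx]).
  assert (Cmod (h x) < eps/2) by (apply H2; eapply Rle_lt_trans; [apply Rmax_r|exact Hx]).
  lra.
Qed.

Lemma vanishes_at_infty_scal (c : C) g :
  vanishes_at_infty g -> vanishes_at_infty (fun x => c * g x)%C.
Proof.
  intros Hg eps He. pose proof (Cmod_ge_0 c).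
  destruct (Hg (eps / (Cmod c + 1))) as [M HM]; [apply Rdiv_lt_0_compat; lra|].
  exists M. intros x Hx. rewrite Cmod_mult. specialize (HM x Hx).
  pose proof (Cmod_ge_0 (g x)).
  apply Rle_lt_trans with ((Cmod c + 1) * Cmod (g x)); [nra|].
  apply Rmult_lt_compat_l with (r := Cmod c + 1) in HM; [|lra].
  replace ((Cmod c + 1) * (eps / (Cmod c + 1))) with eps in HM by (field; lra). exact HM.
Qed.

Lemma vanishes_at_infty_minus g h :
  vanishes_at_infty g -> vanishes_at_infty h -> vanishes_at_infty (fun x => g x - h x)%C.
Proof.
  intros Hg Hh. apply vanishes_at_infty_plus; auto.
  apply (vanishes_at_infty_ext (fun x => (-1) * h x)%C _ 0); [intros; ring|].
  apply vanishes_at_infty_scal; auto.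
Qed.

Lemma vanishes_at_infty_comp_affine g t u :
  0 < t -> vanishes_at_infty g -> vanishes_at_infty (fun x => g (t * (u + x))).
Proof.
  intros Ht H eps He. destruct (H eps He) as [M HM]. exists (M / t - u).
  intros x Hx. apply HM. apply Rmult_lt_compat_l with (r := t) in Hx; auto.
  replace (t * (M / t - u)) with (M - t * u) in Hx by (field; lra). lra.
Qed.

Lemma vanishes_at_infty_rpow b : b < 0 -> vanishes_at_infty (fun x => RtoC (Rpower x b)).
Proof.
  intros Hb eps He. exists (exp (ln eps / b)). intros x Hx.
  assert (0 < x) by (eapply Rlt_trans; [apply exp_pos|exact Hx]).
  rewrite Cmod_R, Rabs_pos_eq by (unfold Rpower; apply Rlt_le, exp_pos).
  unfold Rpower. rewrite <- (exp_ln eps) by auto. apply exp_increasing.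
  apply ln_increasing in Hx; [|apply exp_pos]. rewrite ln_exp in Hx.
  apply Rmult_lt_compat_l with (r := - b) in Hx; [|lra].
  replace (- b * (ln eps / b)) with (- ln eps) in Hx by (field; lra). lra.
Qed.

Lemma vanishes_at_infty_const (c : C) : vanishes_at_infty (fun _ => c) -> c = RtoC 0.
Proof.
  intros H. destruct (Req_dec (Cmod c) 0) as [E|E]; [apply Cmod_eq_0; auto|].
  pose proof (Cmod_ge_0 c). destruct (H (Cmod c)) as [M HM]; [lra|].
  specialize (HM (M + 1)). lra.
Qed.

Lemma vanishes_at_infty_ln_const (a b : C) :
  vanishes_at_infty (fun x => a * RtoC (ln x) + b)%C -> a = RtoC 0.
Proof.
  intros H. destruct (Req_dec (Cmod a) 0) as [E|E]; [apply Cmod_eq_0; auto|].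
  pose proof (Cmod_ge_0 a). pose proof (Cmod_ge_0 b).
  destruct (H 1) as [M HM]; [lra|].
  set (y := Rmax (Rmax M 1) (exp ((Cmod b + 1) / Cmod a)) + 1).
  assert (HyM : M < y /\ 1 < y /\ exp ((Cmod b + 1) / Cmod a) < y).
  { unfold y. pose proof (Rmax_l (Rmax M 1) (exp ((Cmod b + 1) / Cmod a))).
    pose proof (Rmax_r (Rmax M 1) (exp ((Cmod b + 1) / Cmod a))).
    pose proof (Rmax_l M 1). pose proof (Rmax_r M 1). lra. }
  destruct HyM as [HyM [Hy1 Hye]]. specialize (HM y HyM).
  assert (Hln : (Cmod b + 1) / Cmod a < ln y).
  { rewrite <- (ln_exp ((Cmod b + 1) / Cmod a)). apply ln_increasing; [apply exp_pos|exact Hye]. }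
  assert (Htri : Cmod (a * RtoC (ln y)) <= Cmod (a * RtoC (ln y) + b) + Cmod b).
  { replace (a * RtoC (ln y))%C with ((a * RtoC (ln y) + b) + (- b))%C at 1 by ring.
    eapply Rle_trans; [apply Cmod_triangle|]. rewrite Cmod_opp. lra. }
  assert (0 < ln y) by (rewrite <- ln_1; apply ln_increasing; lra).
  rewrite Cmod_mult, Cmod_R, Rabs_pos_eq in Htri by lra.
  apply Rmult_lt_compat_l with (r := Cmod a) in Hln; [|lra].
  replace (Cmod a * ((Cmod b + 1) / Cmod a)) with (Cmod b + 1) in Hln by (field; lra).
  lra.
Qed.

End VanishingAtInfinity.

Definition rescale_term (t b : R) (e : R * C * C) : R * C * C :=
  (fst (fst e),
   (snd (fst e) * (RtoC (Rpower t (fst (fst e))) - RtoC (Rpower t b))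
    + snd e * RtoC (Rpower t (fst (fst e))) * RtoC (ln t))%C,
   (snd e * (RtoC (Rpower t (fst (fst e))) - RtoC (Rpower t b)))%C).

Lemma power_log_sum_rescale L t b x : 0 < t -> 0 < x ->
  (power_log_sum L (t * x) - RtoC (Rpower t b) * power_log_sum L x
   = power_log_sum (map (rescale_term t b) L) x)%C.
Proof.
  intros Ht Hx. induction L as [|[[g d0] d1] L IH]; simpl; [ring|].
  rewrite <- IH, ln_mult, <- (Rpower_mult_distr t x g) by auto.
  rewrite !RtoC_plus, !RtoC_mult. ring.
Qed.

Lemma positive_exponents_rescale t b L :
  positive_exponents L -> positive_exponents (map (rescale_term t b) L).
Proof. induction 1; simpl; constructor; auto. Qed.

Lemma Cmult_eq0 (a b : C) : (a * b)%C = RtoC 0 -> a = RtoC 0 \/ b = RtoC 0.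
Proof.
  intros H. assert (Cmod a * Cmod b = 0) by (rewrite <- Cmod_mult, H; apply Cmod_0).
  destruct (Rmult_integral _ _ H0); [left|right]; apply Cmod_eq_0; auto.
Qed.

Lemma power_log_sum_const_log_rescale L b c0 c1 :
  vanishes_at_infty (fun x => power_log_sum L x + c1 * RtoC (ln x) + c0)%C ->
  vanishes_at_infty (fun x => power_log_sum (map (rescale_term 2 b) L) x
    + c1 * (1 - RtoC (Rpower 2 b)) * RtoC (ln x)
    + (c1 * RtoC (ln 2) + c0 * (1 - RtoC (Rpower 2 b))))%C.
Proof.
  intros H.
  set (F := fun x => (power_log_sum L x + c1 * RtoC (ln x) + c0)%C).
  apply (vanishes_at_infty_ext (fun x => (F (2 * (0 + x))%R - RtoC (Rpower 2 b) * F x)%C) _ 0).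
  - intros x Hx. unfold F. rewrite Rplus_0_l, <- power_log_sum_rescale, ln_mult by lra.
    rewrite RtoC_plus. ring.
  - apply vanishes_at_infty_minus; [apply vanishes_at_infty_comp_affine; [lra|exact H]|].
    apply vanishes_at_infty_scal; auto.
Qed.

Lemma one_minus_rpow_2_neq0 b : 0 < b -> (1 - RtoC (Rpower 2 b))%C <> RtoC 0.
Proof.
  intros Hb E. apply (f_equal fst) in E. simpl in E.
  assert (1 < Rpower 2 b); [|lra].
  unfold Rpower. rewrite <- exp_0. apply exp_increasing.
  apply Rmult_lt_0_compat; auto. rewrite <- ln_1. apply ln_increasing; lra.
Qed.

(* Rescaling twice kills the leading term [(b, d0, d1)], and the induced map on [(c0, c1)] is
   triangular with diagonal [(1 - 2^b)^2], hence invertible. *)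
Lemma power_log_sum_const_log_eq0 L c0 c1 : positive_exponents L ->
  vanishes_at_infty (fun x => power_log_sum L x + c1 * RtoC (ln x) + c0)%C ->
  c0 = RtoC 0 /\ c1 = RtoC 0.
Proof.
  remember (length L) as n eqn:HL. revert L HL c0 c1.
  induction n as [|n IH]; intros L HL c0 c1 HF HS.
  - destruct L; [|discriminate]. simpl in HS.
    assert (Hc1 : c1 = RtoC 0).
    { apply (vanishes_at_infty_ln_const c1 c0).
      eapply (vanishes_at_infty_ext _ _ 0); [|exact HS]. intros; simpl; ring. }
    subst c1. split; auto. apply vanishes_at_infty_const.
    eapply (vanishes_at_infty_ext _ _ 0); [|exact HS]. intros; simpl; ring.
  - destruct L as [|[[b d0] d1] L']; [discriminate|]. simpl in HL. injection HL as HL.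
    inversion HF as [|? ? Hb HF']; subst. simpl in Hb.
    pose proof (power_log_sum_const_log_rescale _ b _ _
                  (power_log_sum_const_log_rescale _ b _ _ HS)) as H2.
    set (u := (1 - RtoC (Rpower 2 b))%C) in H2.
    set (L2 := map (rescale_term 2 b) (map (rescale_term 2 b) L')).
    destruct (IH L2 (eq_sym (eq_trans (length_map _ _) (length_map _ _)))
                 (c1 * RtoC (ln 2) * u + (c1 * RtoC (ln 2) + c0 * u) * u)%C (c1 * u * u)%C
                 (positive_exponents_rescale _ _ _ (positive_exponents_rescale _ _ _ HF')))
      as [E0 E1].
    { eapply (vanishes_at_infty_ext _ _ 0); [|exact H2]. intros x Hx. unfold L2, u. simpl. ring. }
    pose proof (one_minus_rpow_2_neq0 b Hb) as Hu. fold u in Hu.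
    assert (Hc1 : c1 = RtoC 0).
    { destruct (Cmult_eq0 _ _ E1) as [E|E]; [|contradiction].
      destruct (Cmult_eq0 _ _ E); [auto|contradiction]. }
    split; auto. rewrite Hc1 in E0.
    replace (0 * RtoC (ln 2) * u + (0 * RtoC (ln 2) + c0 * u) * u)%C with (c0 * (u * u))%C
      in E0 by ring.
    destruct (Cmult_eq0 _ _ E0) as [E|E]; auto.
    destruct (Cmult_eq0 _ _ E); contradiction.
Qed.

Definition scale_term (c : C) (e : R * C * C) : R * C * C :=
  (fst (fst e), (c * snd (fst e))%C, (c * snd e)%C).

Lemma power_log_sum_app L1 L2 x :
  power_log_sum (L1 ++ L2) x = (power_log_sum L1 x + power_log_sum L2 x)%C.
Proof. induction L1 as [|e L1 IH]; simpl; [ring|]. rewrite IH. ring. Qed.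

Lemma power_log_sum_scale c L x :
  power_log_sum (map (scale_term c) L) x = (c * power_log_sum L x)%C.
Proof. induction L as [|[[g d0] d1] L IH]; simpl; [ring|]. rewrite IH. ring. Qed.

Lemma positive_exponents_scale c L :
  positive_exponents L -> positive_exponents (map (scale_term c) L).
Proof. induction 1; simpl; constructor; auto. Qed.

Lemma positive_exponents_app L1 L2 :
  positive_exponents L1 -> positive_exponents L2 -> positive_exponents (L1 ++ L2).
Proof. intros; apply Forall_app; auto. Qed.

Section ConstLogCoeffs.
Implicit Types F G : R -> C.

Lemma has_const_log_coeffs_ext F G a b M0 :
  (forall x, M0 < x -> F x = G x) -> has_const_log_coeffs F a b -> has_const_log_coeffs G a b.
Proof.
  intros E [L [HL H]]. exists L; split; auto.
  eapply (vanishes_at_infty_ext _ _ M0); [|exact H]. intros x Hx; simpl. rewrite E; auto.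
Qed.

Lemma has_const_log_coeffs_plus F G a b a' b' :
  has_const_log_coeffs F a b -> has_const_log_coeffs G a' b' ->
  has_const_log_coeffs (fun x => F x + G x)%C (a + a') (b + b').
Proof.
  intros [L [HL H]] [L' [HL' H']]. exists (L ++ L').
  split; [apply positive_exponents_app; auto|].
  eapply (vanishes_at_infty_ext _ _ 0); [|exact (vanishes_at_infty_plus _ _ H H')].
  intros x _. rewrite power_log_sum_app. ring.
Qed.

Lemma has_const_log_coeffs_scal c F a b :
  has_const_log_coeffs F a b -> has_const_log_coeffs (fun x => c * F x)%C (c * a) (c * b).
Proof.
  intros [L [HL H]]. exists (map (scale_term c) L).
  split; [apply positive_exponents_scale; auto|].
  eapply (vanishes_at_infty_ext _ _ 0); [|exact (vanishes_at_infty_scal c _ H)].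
  intros x _. rewrite power_log_sum_scale. ring.
Qed.

Lemma has_const_log_coeffs_minus F G a b a' b' :
  has_const_log_coeffs F a b -> has_const_log_coeffs G a' b' ->
  has_const_log_coeffs (fun x => F x - G x)%C (a - a') (b - b').
Proof.
  intros HF HG. apply (has_const_log_coeffs_scal (-1)) in HG.
  pose proof (has_const_log_coeffs_plus _ _ _ _ _ _ HF HG) as H.
  replace (a - a')%C with (a + -1 * a')%C by ring.
  replace (b - b')%C with (b + -1 * b')%C by ring.
  eapply (has_const_log_coeffs_ext _ _ _ _ 0); [|exact H]. intros; simpl; ring.
Qed.

Lemma has_const_log_coeffs_unique F a b a' b' :
  has_const_log_coeffs F a b -> has_const_log_coeffs F a' b' -> a = a' /\ b = b'.
Proof.
  intros HF HF'. destruct (has_const_log_coeffs_minus _ _ _ _ _ _ HF' HF) as [L [HL H]].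
  destruct (power_log_sum_const_log_eq0 L (a' - a) (b' - b) HL) as [E0 E1].
  - eapply (vanishes_at_infty_ext _ _ 0); [|apply (vanishes_at_infty_scal (-1) _ H)].
    intros x _. cbv beta. ring.
  - split; [apply (f_equal (fun z => z + a)%C) in E0 | apply (f_equal (fun z => z + b)%C) in E1];
      ring_simplify in E0; ring_simplify in E1; auto.
Qed.

Lemma has_const_log_coeffs_vanishing F : vanishes_at_infty F -> has_const_log_coeffs F 0 0.
Proof.
  intros H. exists nil. split; [constructor|].
  eapply (vanishes_at_infty_ext _ _ 0); [|exact H]. intros; simpl; ring.
Qed.

Lemma has_const_log_coeffs_const c : has_const_log_coeffs (fun _ => c) c 0.
Proof.
  exists nil. split; [constructor|].
  eapply (vanishes_at_infty_ext _ _ 0); [|exact vanishes_at_infty_0]. intros; simpl; ring.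
Qed.

Lemma has_const_log_coeffs_ln : has_const_log_coeffs (fun x => RtoC (ln x)) 0 1.
Proof.
  exists nil. split; [constructor|].
  eapply (vanishes_at_infty_ext _ _ 0); [|exact vanishes_at_infty_0]. intros; simpl; ring.
Qed.

Lemma has_const_log_coeffs_power_log b d0 d1 : 0 < b ->
  has_const_log_coeffs (fun x => (d0 + d1 * RtoC (ln x)) * RtoC (Rpower x b))%C 0 0.
Proof.
  intros Hb. exists ((b, d0, d1) :: nil). split; [constructor; auto|].
  eapply (vanishes_at_infty_ext _ _ 0); [|exact vanishes_at_infty_0]. intros; simpl; ring.
Qed.

Lemma has_const_log_coeffs_pow_S n : has_const_log_coeffs (fun x => RtoC (x ^ S n)) 0 0.
Proof.
  eapply has_const_log_coeffs_ext; [|apply (has_const_log_coeffs_power_log (INR (S n)) 1 0)].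
  - instantiate (1 := 0). intros x Hx. cbv beta. rewrite (Rpower_pow (S n) x Hx). ring.
  - apply lt_0_INR; lia.
Qed.

Lemma has_const_log_coeffs_csum (f : nat -> R -> C) (a b : nat -> C) n :
  (forall k, has_const_log_coeffs (f k) (a k) (b k)) ->
  has_const_log_coeffs (fun x => csum (fun k => f k x) n) (csum a n) (csum b n).
Proof.
  intros H. induction n; simpl; [apply has_const_log_coeffs_const|].
  apply has_const_log_coeffs_plus; auto.
Qed.

Lemma has_log_expansion_ext F G M0 :
  (forall x, M0 < x -> F x = G x) -> has_log_expansion F -> has_log_expansion G.
Proof. intros E (a & b & H). exists a, b. eapply has_const_log_coeffs_ext; eauto. Qed.

Lemma has_log_expansion_plus F G :
  has_log_expansion F -> has_log_expansion G -> has_log_expansion (fun x => F x + G x)%C.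
Proof. intros (a & b & H) (a' & b' & H'). do 2 eexists. apply has_const_log_coeffs_plus; eauto. Qed.

Lemma has_log_expansion_scal c F : has_log_expansion F -> has_log_expansion (fun x => c * F x)%C.
Proof. intros (a & b & H). do 2 eexists. apply has_const_log_coeffs_scal; eauto. Qed.

Lemma has_log_expansion_const c : has_log_expansion (fun _ => c).
Proof. do 2 eexists. apply has_const_log_coeffs_const. Qed.

Lemma has_log_expansion_vanishing F : vanishes_at_infty F -> has_log_expansion F.
Proof. intros H. do 2 eexists. apply has_const_log_coeffs_vanishing; auto. Qed.

End ConstLogCoeffs.

Fixpoint rsum (f : nat -> R) (n : nat) : R :=
  match n with O => 0 | S m => rsum f m + f m end.

Lemma rsum_ext f g n : (forall k, (k < n)%nat -> f k = g k) -> rsum f n = rsum g n.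
Proof. induction n; intros H; simpl; auto. rewrite IHn, H; auto. Qed.

Lemma rsum_succ_l f n : rsum f (S n) = f O + rsum (fun k => f (S k)) n.
Proof. induction n; simpl in *; [ring|]. rewrite IHn. ring. Qed.

Lemma rsum_0 n : rsum (fun _ => 0) n = 0.
Proof. induction n; simpl; [|rewrite IHn]; ring. Qed.

Lemma rsum_scal a f n : rsum (fun k => a * f k) n = a * rsum f n.
Proof. induction n; simpl; [|rewrite IHn]; ring. Qed.

Lemma csum_ext f g n : (forall k, (k < n)%nat -> f k = g k) -> csum f n = csum g n.
Proof. induction n; intros H; simpl; auto. rewrite IHn, H; auto. Qed.

Lemma csum_0 n : csum (fun _ => RtoC 0) n = RtoC 0.
Proof. induction n; simpl; auto. rewrite IHn. ring. Qed.

Lemma csum_succ_l f n : csum f (S n) = (f O + csum (fun k => f (S k)) n)%C.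
Proof. induction n; simpl in *; [ring|]. rewrite IHn. ring. Qed.

Lemma csum_plus f g n : csum (fun k => f k + g k)%C n = (csum f n + csum g n)%C.
Proof. induction n; cbn [csum]; [ring|]. rewrite IHn. ring. Qed.

Lemma csum_minus f g n : csum (fun k => f k - g k)%C n = (csum f n - csum g n)%C.
Proof. induction n; cbn [csum]; [ring|]. rewrite IHn. ring. Qed.

Lemma fst_csum f n : fst (csum f n) = rsum (fun k => fst (f k)) n.
Proof. induction n; simpl; auto. rewrite IHn. reflexivity. Qed.

Lemma snd_csum f n : snd (csum f n) = rsum (fun k => snd (f k)) n.
Proof. induction n; simpl; auto. rewrite IHn. reflexivity. Qed.

(** * Taylor bounds on [0, 1] and expansions of powers of [1 + x] *)

Lemma is_derive_rsum_pow (c : nat -> R) K u :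
  is_derive (fun v => rsum (fun k => c k / INR (S k) * v ^ S k) K) u
            (rsum (fun k => c k * u ^ k) K).
Proof.
  induction K as [|K IH]; cbn [rsum].
  - apply (is_derive_const (K := R_AbsRing) (V := R_NormedModule) 0).
  - apply (is_derive_plus (K := R_AbsRing) (V := R_NormedModule)); auto.
    auto_derive; auto. simpl pred. field. change (INR (S K) <> 0). apply not_0_INR; lia.
Qed.

Lemma mvt_bound_01 (g h : R -> R) B K :
  (forall v, 0 <= v <= 1 -> is_derive g v (h v)) ->
  (forall v, 0 <= v <= 1 -> Rabs (h v) <= B * v ^ K) ->
  forall u, 0 <= u <= 1 -> Rabs (g u - g 0) <= B * u ^ S K.
Proof.
  intros Hd Hb u Hu.
  assert (HB : 0 <= B).
  { specialize (Hb 1 ltac:(lra)). rewrite pow1, Rmult_1_r in Hb.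
    eapply Rle_trans; [apply Rabs_pos|exact Hb]. }
  destruct (Req_dec u 0) as [->|Hu0].
  - rewrite Rminus_diag, Rabs_R0. simpl. lra.
  - destruct (MVT_gen g 0 u h) as [xi [Hxi E]].
    + intros x Hx. rewrite Rmin_left, Rmax_right in Hx by lra. apply Hd. lra.
    + intros x Hx. rewrite Rmin_left, Rmax_right in Hx by lra.
      apply continuity_pt_filterlim.
      apply (ex_derive_continuous (K := R_AbsRing) (V := R_NormedModule)).
      eexists; apply Hd; lra.
    + rewrite Rmin_left, Rmax_right in Hxi by lra.
      rewrite E, Rabs_mult, Rminus_0_r, (Rabs_pos_eq u) by lra.
      assert (Rabs (h xi) <= B * u ^ K).
      { eapply Rle_trans; [apply Hb; lra|].
        apply Rmult_le_compat_l; [lra|]. apply pow_incr; lra. }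
      simpl. pose proof (Rabs_pos (h xi)). nra.
Qed.

Definition taylor_bound_01 (K : nat) (g : R -> R) : Prop :=
  exists (c : nat -> R) (B : R), forall u, 0 <= u <= 1 ->
    Rabs (g u - rsum (fun k => c k * u ^ k) (S K)) <= B * u ^ S K.

Lemma taylor_bound_01_0 (g h : R -> R) B :
  (forall u, 0 <= u <= 1 -> is_derive g u (h u)) ->
  (forall u, 0 <= u <= 1 -> Rabs (h u) <= B) -> taylor_bound_01 0 g.
Proof.
  intros Hd Hb. exists (fun _ => g 0), B. intros u Hu.
  replace (rsum _ 1) with (g 0) by (simpl; ring).
  apply (mvt_bound_01 g h B 0); auto. intros v Hv. rewrite Rmult_1_r. auto.
Qed.

Lemma taylor_bound_01_S K (g h : R -> R) :
  (forall u, 0 <= u <= 1 -> is_derive g u (h u)) -> taylor_bound_01 K h ->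
  taylor_bound_01 (S K) g.
Proof.
  intros Hd [c [B Hb]].
  set (P := fun v => rsum (fun k => c k / INR (S k) * v ^ S k) (S K)).
  set (c' := fun k => match k with O => g 0 | S k' => c k' / INR (S k') end).
  exists c', B. intros u Hu.
  assert (EP0 : P 0 = 0).
  { unfold P. rewrite (rsum_ext _ (fun _ => 0)), rsum_0; [ring|]. intros; simpl; ring. }
  assert (Ec : rsum (fun k => c' k * u ^ k) (S (S K)) = g 0 + P u).
  { rewrite rsum_succ_l. unfold P, c'. cbn beta iota. rewrite pow_O. ring. }
  rewrite Ec. replace (g u - (g 0 + P u)) with ((g u - P u) - (g 0 - P 0)) by (rewrite EP0; ring).
  apply (mvt_bound_01 (fun v => g v - P v) (fun v => h v - rsum (fun k => c k * v ^ k) (S K)));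
    auto.
  intros v Hv. apply (is_derive_minus (K := R_AbsRing) (V := R_NormedModule)); auto.
  apply is_derive_rsum_pow.
Qed.

Lemma taylor_bound_01_scal K a g : taylor_bound_01 K g -> taylor_bound_01 K (fun u => a * g u).
Proof.
  intros [c [B H]]. exists (fun k => a * c k), (Rabs a * B). intros u Hu.
  rewrite (rsum_ext _ (fun k => a * (c k * u ^ k))) by (intros; ring).
  rewrite rsum_scal, <- Rmult_minus_distr_l, Rabs_mult, Rmult_assoc.
  apply Rmult_le_compat_l; [apply Rabs_pos|auto].
Qed.

Lemma is_derive_rpow_1p r u : -1 < u ->
  is_derive (fun v => Rpower (1 + v) r) u (r * Rpower (1 + u) (r - 1)).
Proof.
  intros Hu. unfold Rpower. auto_derive; [lra|].
  replace ((r - 1) * ln (1 + u)) with (r * ln (1 + u) + - ln (1 + u)) by ring.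
  rewrite exp_plus, exp_Ropp, exp_ln by lra. field. lra.
Qed.

Lemma rpow_1p_le s u : 0 <= u <= 1 -> Rpower (1 + u) s <= Rpower 2 (Rabs s).
Proof.
  intros Hu. unfold Rpower.
  assert (0 <= ln (1 + u)) by (rewrite <- ln_1; apply ln_le; lra).
  assert (ln (1 + u) <= ln 2) by (apply ln_le; lra).
  assert (Hle : s * ln (1 + u) <= Rabs s * ln 2).
  { apply Rle_trans with (Rabs s * ln (1 + u)).
    - apply Rmult_le_compat_r; auto. apply Rle_abs.
    - apply Rmult_le_compat_l; auto. apply Rabs_pos. }
  destruct Hle as [Hlt|Heq]; [left; apply exp_increasing; auto|rewrite Heq; lra].
Qed.

Lemma taylor_bound_01_rpow_1p K r : taylor_bound_01 K (fun u => Rpower (1 + u) r).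
Proof.
  revert r. induction K as [|K IH]; intros r.
  - apply (taylor_bound_01_0 _ (fun u => r * Rpower (1 + u) (r - 1))
                                (Rabs r * Rpower 2 (Rabs (r - 1)))).
    + intros u Hu. apply is_derive_rpow_1p. lra.
    + intros u Hu. rewrite Rabs_mult. apply Rmult_le_compat_l; [apply Rabs_pos|].
      rewrite Rabs_pos_eq by (unfold Rpower; apply Rlt_le, exp_pos). apply rpow_1p_le; auto.
  - apply (taylor_bound_01_S _ _ (fun u => r * Rpower (1 + u) (r - 1))).
    + intros u Hu. apply is_derive_rpow_1p. lra.
    + apply taylor_bound_01_scal, IH.
Qed.

Lemma taylor_bound_01_ln_1p K : taylor_bound_01 K (fun u => ln (1 + u)).
Proof.
  assert (Hd : forall u, 0 <= u <= 1 -> is_derive (fun v => ln (1 + v)) u (Rpower (1 + u) (- (1)))).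
  { intros u Hu. rewrite Rpower_Ropp, Rpower_1 by lra. auto_derive; [lra|]. field. lra. }
  destruct K as [|K].
  - apply (taylor_bound_01_0 _ _ 1 Hd). intros u Hu.
    rewrite Rpower_Ropp, Rpower_1, Rabs_pos_eq by (try apply Rlt_le, Rinv_0_lt_compat; lra).
    rewrite <- Rinv_1. apply Rinv_le_contravar; lra.
  - apply (taylor_bound_01_S _ _ _ Hd), taylor_bound_01_rpow_1p.
Qed.

Lemma has_log_expansion_rpow b : has_log_expansion (fun x => RtoC (Rpower x b)).
Proof.
  destruct (Rtotal_order b 0) as [Hb|[->|Hb]].
  - apply has_log_expansion_vanishing, vanishes_at_infty_rpow; auto.
  - apply (has_log_expansion_ext (fun _ => RtoC 1) _ 0); [|apply has_log_expansion_const].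
    intros x Hx. rewrite Rpower_O; auto.
  - do 2 eexists. eapply has_const_log_coeffs_ext; [|apply (has_const_log_coeffs_power_log b 1 0 Hb)].
    instantiate (1 := 0). intros x _. simpl. ring.
Qed.

Lemma has_log_expansion_rsum (f : nat -> R -> R) n :
  (forall k, has_log_expansion (fun x => RtoC (f k x))) ->
  has_log_expansion (fun x => RtoC (rsum (fun k => f k x) n)).
Proof.
  intros H. induction n as [|n IH]; cbn [rsum]; [apply has_log_expansion_const|].
  eapply (has_log_expansion_ext _ _ 0); [|apply has_log_expansion_plus; [exact IH|apply H]].
  intros; simpl. rewrite RtoC_plus. auto.
Qed.

Lemma exists_nat_gt a : exists K : nat, a < INR K.
Proof.
  destruct (archimed a) as [H _]. exists (Z.to_nat (up a)).
  destruct (Z_le_gt_dec (up a) 0) as [Hz|Hz].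
  - apply IZR_le in Hz. pose proof (pos_INR (Z.to_nat (up a))). lra.
  - rewrite INR_IZR_INZ, Z2Nat.id by lia. lra.
Qed.

(* Truncating the Taylor expansion of [g] at order [K > a - 1] leaves powers [x^(a - k)]
   and a remainder [O(x^(a - K - 1))] that tends to [0]. *)
Lemma has_log_expansion_rpow_mul_inv a g : (forall K, taylor_bound_01 K g) ->
  has_log_expansion (fun x => RtoC (Rpower x a * g (/ x))).
Proof.
  intros HT. destruct (exists_nat_gt a) as [K HK]. destruct (HT K) as [c [B HB]].
  eapply (has_log_expansion_ext (fun x => RtoC (rsum (fun k => c k * Rpower x (a - INR k))%R (S K))
       + RtoC (Rpower x a * (g (/x) - rsum (fun k => c k * (/ x) ^ k) (S K)))%R)%C _ 1).
  { intros x Hx. rewrite <- RtoC_plus. f_equal.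
    rewrite (rsum_ext _ (fun k => Rpower x a * (c k * (/ x) ^ k))), rsum_scal; [ring|].
    intros k _. unfold Rminus. rewrite Rpower_plus, Rpower_Ropp, Rpower_pow, pow_inv by lra. ring. }
  apply has_log_expansion_plus.
  - apply has_log_expansion_rsum. intros k.
    eapply (has_log_expansion_ext (fun x => c k * RtoC (Rpower x (a - INR k)))%C _ 0).
    + intros; rewrite RtoC_mult; auto.
    + apply has_log_expansion_scal, has_log_expansion_rpow.
  - apply has_log_expansion_vanishing.
    apply (vanishes_at_infty_le (fun x => B * RtoC (Rpower x (a - INR (S K))))%C _ 1).
    + intros x Hx. rewrite <- RtoC_mult, !Cmod_R, Rabs_mult.
      assert (Hu : 0 <= / x <= 1).
      { split; [apply Rlt_le, Rinv_0_lt_compat; lra|].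
        rewrite <- Rinv_1. apply Rinv_le_contravar; lra. }
      specialize (HB (/ x) Hu).
      assert (0 < Rpower x a) by (unfold Rpower; apply exp_pos).
      assert (0 < / x ^ S K) by (apply Rinv_0_lt_compat, pow_lt; lra).
      rewrite pow_inv in HB.
      assert (0 <= B) by (pose proof (Rabs_pos (g (/ x) - rsum (fun k => c k * (/ x) ^ k) (S K))); nra).
      assert (E : Rpower x (a - INR (S K)) = Rpower x a * / x ^ S K).
      { unfold Rminus. rewrite Rpower_plus, Rpower_Ropp, Rpower_pow by lra. reflexivity. }
      rewrite E, (Rabs_pos_eq (Rpower x a)), (Rabs_pos_eq (B * _)) by (try apply Rmult_le_pos; nra).
      replace (B * (Rpower x a * / x ^ S K)) with (Rpower x a * (B * / x ^ S K)) by ring.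
      apply Rmult_le_compat_l; lra.
    + apply vanishes_at_infty_scal, vanishes_at_infty_rpow. rewrite S_INR. lra.
Qed.

Lemma has_log_expansion_rpow_1p a : has_log_expansion (fun x => RtoC (Rpower (1 + x) a)).
Proof.
  apply (has_log_expansion_ext (fun x => RtoC (Rpower x a * Rpower (1 + / x) a)) _ 0).
  - intros x Hx. f_equal.
    rewrite Rpower_mult_distr by (try apply Rplus_lt_0_compat; try apply Rinv_0_lt_compat; lra).
    f_equal. field. lra.
  - apply (has_log_expansion_rpow_mul_inv a (fun u => Rpower (1 + u) a)).
    intros K; apply taylor_bound_01_rpow_1p.
Qed.

Lemma sum_f_R0_rsum f n : sum_f_R0 f n = rsum f (S n).
Proof. induction n; simpl; [ring|]. rewrite IHn. reflexivity. Qed.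

(* [(1 + x)^j ln (1 + x) = sum_i C(j,i) x^i (ln x + ln (1 + 1/x))]. *)
Lemma has_log_expansion_pow_1p_ln_1p (j : nat) :
  has_log_expansion (fun x => RtoC ((1 + x) ^ j * ln (1 + x))).
Proof.
  apply (has_log_expansion_ext
    (fun x => RtoC (rsum (fun i => Binomial.C j i * (x ^ i * ln x))%R (S j))
            + RtoC (rsum (fun i => Binomial.C j i * (Rpower x (INR i) * ln (1 + / x)))%R (S j)))%C _ 0).
  - intros x Hx. rewrite <- RtoC_plus. f_equal.
    replace (1 + x) with (x * (1 + / x)) at 2 by (field; lra).
    rewrite ln_mult by (try apply Rplus_lt_0_compat; try apply Rinv_0_lt_compat; lra).
    replace (1 + x) with (x + 1) by ring. rewrite binomial, sum_f_R0_rsum.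
    generalize (S j). intros n. induction n; cbn [rsum]; [ring|].
    rewrite Rmult_plus_distr_r, <- IHn, Rpower_pow, pow1 by lra. ring.
  - apply has_log_expansion_plus; apply has_log_expansion_rsum; intros i.
    + apply (has_log_expansion_ext (fun x => RtoC (Binomial.C j i) * RtoC (x ^ i * ln x)%R)%C _ 0);
        [intros; rewrite <- RtoC_mult; reflexivity|].
      apply has_log_expansion_scal. destruct i as [|i].
      * apply (has_log_expansion_ext (fun x => RtoC (ln x)) _ 0); [intros; simpl; f_equal; ring|].
        do 2 eexists; apply has_const_log_coeffs_ln.
      * do 2 eexists.
        eapply has_const_log_coeffs_ext; [|apply (has_const_log_coeffs_power_log (INR (S i)) 0 1)].
        -- instantiate (1 := 0). intros x Hx. cbv beta.
           rewrite (Rpower_pow (S i) x Hx), RtoC_mult. ring.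
        -- apply lt_0_INR; lia.
    + apply (has_log_expansion_ext
               (fun x => RtoC (Binomial.C j i) * RtoC (Rpower x (INR i) * ln (1 + / x))%R)%C _ 0);
        [intros; rewrite <- RtoC_mult; reflexivity|].
      apply has_log_expansion_scal, (has_log_expansion_rpow_mul_inv (INR i) (fun u => ln (1 + u))).
      intros K; apply taylor_bound_01_ln_1p.
Qed.

Lemma cpown_RtoC r n : cpown (RtoC r) n = RtoC (r ^ n).
Proof. induction n; simpl; [reflexivity|]. rewrite IHn, RtoC_mult. reflexivity. Qed.

Lemma cpown_mult x y n : cpown (x * y)%C n = (cpown x n * cpown y n)%C.
Proof. induction n; simpl; [ring|]. rewrite IHn. ring. Qed.

Lemma Carg_RtoC_pos r : 0 < r -> Carg (RtoC r) = 0.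
Proof.
  intros Hr. unfold Carg. simpl. destruct (Rlt_dec 0 r); [|lra].
  unfold Rdiv. rewrite Rmult_0_l. apply atan_0.
Qed.

Lemma Clog_RtoC_pos r : 0 < r -> Clog (RtoC r) = RtoC (ln r).
Proof. intros Hr. unfold Clog. rewrite Carg_RtoC_pos, Cmod_R, Rabs_pos_eq by lra. reflexivity. Qed.

Lemma Cpow_RtoC_pos (r a : R) : 0 < r -> Defs.Cpow (RtoC r) a = RtoC (Rpower r a).
Proof.
  intros Hr. unfold Defs.Cpow, Cexp. rewrite Clog_RtoC_pos by auto. unfold Rpower.
  apply injective_projections; simpl.
  - replace (a * ln r - 0 * 0) with (a * ln r) by ring.
    replace (a * 0 + 0 * ln r) with 0 by ring. rewrite cos_0. ring.
  - replace (a * 0 + 0 * ln r) with 0 by ring. rewrite sin_0. ring.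
Qed.

Lemma atan_nonneg u : 0 <= u -> 0 <= atan u.
Proof.
  intros [H|<-]; [|rewrite atan_0; lra].
  rewrite <- atan_0. left; apply atan_increasing; auto.
Qed.

Lemma atan_nonpos u : u <= 0 -> atan u <= 0.
Proof. intros H. rewrite <- (Ropp_involutive u), atan_opp. pose proof (atan_nonneg (- u)). lra. Qed.

Lemma atan_plus u v : u * v < 1 -> atan u + atan v = atan ((u + v) / (1 - u * v)).
Proof.
  intros Huv. pose proof (atan_bound u). pose proof (atan_bound v).
  assert (Hr : - (PI / 2) < atan u + atan v < PI / 2).
  { destruct (Rlt_le_dec 0 u) as [Hu|Hu]; destruct (Rlt_le_dec 0 v) as [Hv|Hv].
    - assert (v < / u). { apply Rmult_lt_reg_l with u; auto. rewrite Rinv_r by lra. lra. }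
      apply atan_increasing in H1. rewrite atan_inv in H1 by auto.
      pose proof (atan_nonneg u). pose proof (atan_nonneg v). lra.
    - pose proof (atan_nonneg u). pose proof (atan_nonpos v). lra.
    - pose proof (atan_nonpos u). pose proof (atan_nonneg v). lra.
    - destruct (Req_dec u 0) as [->|Hu0]; [rewrite atan_0; lra|].
      destruct (Req_dec v 0) as [->|Hv0]; [rewrite atan_0; lra|].
      assert (- v < / (- u)). { apply Rmult_lt_reg_l with (- u); [lra|]. rewrite Rinv_r by lra. lra. }
      apply atan_increasing in H1. rewrite atan_inv, !atan_opp in H1 by lra.
      pose proof (atan_nonpos u). pose proof (atan_nonpos v). lra. }
  rewrite <- (atan_tan (atan u + atan v)) by lra. f_equal.
  rewrite tan_plus, !tan_atan; [reflexivity| | | |rewrite !tan_atan; lra];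
    apply Rgt_not_eq, cos_gt_0; lra.
Qed.

Lemma Carg_Re_pos z : 0 < fst z -> Carg z = atan (snd z / fst z).
Proof. intros H. unfold Carg. destruct (Rlt_dec 0 (fst z)); [reflexivity|lra]. Qed.

Lemma Cmod_Re_pos z : 0 < fst z -> 0 < Cmod z.
Proof. intros H. apply Cmod_gt_0. intros ->. simpl in H. lra. Qed.

Lemma Clog_mult_Re_pos a b : 0 < fst a -> 0 < fst b -> 0 < fst (a * b)%C ->
  Clog (a * b)%C = (Clog a + Clog b)%C.
Proof.
  intros Ha Hb Hab. unfold Clog. apply injective_projections; simpl.
  - rewrite Cmod_mult, ln_mult; auto; apply Cmod_Re_pos; auto.
  - rewrite !Carg_Re_pos; auto. destruct a as [a1 a2], b as [b1 b2]. simpl in *.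
    rewrite atan_plus; [f_equal; field; repeat split; lra|].
    replace (a2 / a1 * (b2 / b1)) with ((a2 * b2) / (a1 * b1)) by (field; lra).
    apply Rmult_lt_reg_r with (a1 * b1); [nra|]. unfold Rdiv.
    rewrite Rmult_assoc, Rinv_l by nra. lra.
Qed.

Lemma Re_pos_of_Carg z : Rabs (Carg z) < PI / 2 -> z <> RtoC 0 -> 0 < fst z.
Proof.
  intros H Hz. destruct z as [x y]. unfold Carg in H. simpl in H |- *.
  pose proof PI_RGT_0. revert H.
  destruct (Rlt_dec 0 x); auto. intros H; exfalso. revert H.
  destruct (Rlt_dec x 0); intros H.
  - assert (Hx : / x < 0) by (apply Rinv_lt_0_compat; lra). revert H.
    destruct (Rle_dec 0 y); intros H.
    + assert (Hyx : y / x <= 0) by (unfold Rdiv; nra).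
      pose proof (atan_bound (y / x)). pose proof (atan_nonpos _ Hyx).
      rewrite Rabs_pos_eq in H by lra. lra.
    + assert (Hyx : 0 < y / x) by (unfold Rdiv; nra).
      pose proof (atan_bound (y / x)). pose proof (atan_nonneg _ (Rlt_le _ _ Hyx)).
      rewrite Rabs_left in H by lra. lra.
  - assert (x = 0) by lra. subst. revert H.
    destruct (Rlt_dec 0 y); intros H; [rewrite Rabs_pos_eq in H; lra|]. revert H.
    destruct (Rlt_dec y 0); intros H; [rewrite Rabs_left in H; lra|].
    apply Hz. apply injective_projections; simpl; lra.
Qed.

Lemma in_sector_Re_ge theta c z : 0 < theta < PI -> in_sector theta c z -> c <= fst z.
Proof.
  intros Ht Hs. unfold in_sector in Hs.
  destruct (Ceq_dec (z - RtoC c)%C (RtoC 0)) as [E|E].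
  - apply (f_equal fst) in E. simpl in E. lra.
  - apply Re_pos_of_Carg in E; [simpl in E; lra|lra].
Qed.

Lemma not_in_sector_neg theta c y : 0 < theta < PI -> 0 < c -> 0 < y ->
  ~ in_sector theta c (RtoC (- y)).
Proof.
  intros Ht Hc Hy Hs.
  assert (E : (RtoC (- y) - RtoC c)%C = (- (y + c), 0)) by (apply injective_projections; simpl; ring).
  unfold in_sector in Hs. rewrite E in Hs. unfold Carg in Hs. cbn [fst snd] in Hs.
  revert Hs. destruct (Rlt_dec 0 (- (y + c))); [lra|]. destruct (Rlt_dec (- (y + c)) 0); [|lra].
  destruct (Rle_dec 0 0); [|lra]. intros Hs.
  replace (0 / - (y + c)) with 0 in Hs by (field; lra). rewrite atan_0, Rplus_0_l in Hs.
  rewrite Rabs_pos_eq in Hs by (pose proof PI_RGT_0; lra). lra.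
Qed.

(** * Weierstrass primary factors *)

Definition log1p_corr (p : nat) (w : C) : C :=
  csum (fun j => RtoC ((-1) ^ S j / INR (S j)) * cpown w (S j))%C p.

Definition log_primary (p : nat) (w : C) : C := (Clog (RtoC 1 + w) + log1p_corr p w)%C.

Lemma logGamma_log_primary z Sq :
  logGamma z Sq = (- CSeries (fun n => log_primary (genus Sq) (z / Sq n)))%C.
Proof. reflexivity. Qed.

Lemma im_le_Cmod z : Rabs (snd z) <= Cmod z.
Proof. eapply Rle_trans; [apply Rmax_r|apply Rmax_Cmod]. Qed.

Lemma Cmod_le_Rabs_sum z : Cmod z <= Rabs (fst z) + Rabs (snd z).
Proof.
  pose proof (Rabs_pos (fst z)). pose proof (Rabs_pos (snd z)).
  unfold Cmod. rewrite <- (sqrt_pow2 (Rabs (fst z) + Rabs (snd z))) by lra.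
  apply sqrt_le_1_alt. rewrite <- (pow2_abs (fst z)), <- (pow2_abs (snd z)). nra.
Qed.

Lemma fst_Cplus (x y : C) : fst (x + y)%C = fst x + fst y.
Proof. reflexivity. Qed.

Lemma snd_Cplus (x y : C) : snd (x + y)%C = snd x + snd y.
Proof. reflexivity. Qed.

Lemma fst_RtoC_mult (r : R) (z : C) : fst (RtoC r * z)%C = r * fst z.
Proof. simpl. ring. Qed.

Lemma snd_RtoC_mult (r : R) (z : C) : snd (RtoC r * z)%C = r * snd z.
Proof. simpl. ring. Qed.

Lemma ln_sqrt q : 0 < q -> ln (sqrt q) = ln q / 2.
Proof.
  intros Hq. assert (0 < sqrt q) by (apply sqrt_lt_R0; auto).
  rewrite <- (sqrt_sqrt q) at 2 by lra. rewrite ln_mult by auto. field.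
Qed.

Lemma cpown_opp_scal (w : C) t n :
  cpown (- (RtoC t * w))%C n = (RtoC ((-1) ^ n * t ^ n) * cpown w n)%C.
Proof.
  induction n; simpl cpown; [apply injective_projections; simpl; ring|].
  rewrite IHn. destruct (cpown w n) as [u v], w as [a b].
  apply injective_projections; simpl; ring.
Qed.

Lemma geometric_log_derivative (w : C) (t : R) p : (1 + RtoC t * w)%C <> RtoC 0 ->
  (w / (1 + RtoC t * w) + csum (fun k => RtoC ((-1) ^ S k * t ^ k) * cpown w (S k)) p)%C
  = (w * cpown (- (RtoC t * w)) p / (1 + RtoC t * w))%C.
Proof.
  intros Hnz. induction p as [|q IH]; cbn [csum].
  - simpl. field; auto.
  - rewrite Cplus_assoc, IH, !cpown_opp_scal. change (cpown w (S q)) with (w * cpown w q)%C.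
    replace (RtoC ((-1) ^ S q * t ^ q)) with (- RtoC ((-1) ^ q * t ^ q))%C
      by (apply injective_projections; simpl; ring).
    replace (RtoC ((-1) ^ S q * t ^ S q)) with (- RtoC t * RtoC ((-1) ^ q * t ^ q))%C
      by (apply injective_projections; simpl; ring).
    field; auto.
Qed.

(* The real and imaginary parts of [t |-> log_primary p (t w)] are differentiated separately
   on [0, 1]: the derivative [w (- t w)^p / (1 + t w)] is at most [2 |w|^(p+1)]. *)
Section LogPrimaryBound.
Variable w : C.
Variable p : nat.
Hypothesis Hw : Cmod w <= 1/2.

Let a := fst w.
Let b := snd w.
Let Q t := (1 + t * a) ^ 2 + (t * b) ^ 2.
Let ReF t := ln (Q t) / 2
  + rsum (fun k => ((-1) ^ S k * fst (cpown w (S k))) / INR (S k) * t ^ S k) p.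
Let ImF t := atan (t * b / (1 + t * a))
  + rsum (fun k => ((-1) ^ S k * snd (cpown w (S k))) / INR (S k) * t ^ S k) p.
Let D t := (w / (1 + RtoC t * w)
  + csum (fun k => RtoC ((-1) ^ S k * t ^ k) * cpown w (S k)) p)%C.

Lemma Re_1_plus_tw_pos t : 0 <= t <= 1 -> 1/2 <= 1 + t * a.
Proof.
  intros Ht. pose proof (re_le_Cmod w) as Ha. unfold Re in Ha. fold a in Ha.
  apply Rabs_le_between in Ha. nra.
Qed.

Lemma Q_pos t : 0 <= t <= 1 -> 0 < Q t.
Proof.
  intros Ht. pose proof (Re_1_plus_tw_pos t Ht). unfold Q.
  pose proof (pow2_ge_0 (t * b)). assert (0 < (1 + t * a) ^ 2) by (apply pow_lt; lra). lra.
Qed.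

Lemma one_plus_tw_neq0 t : 0 <= t <= 1 -> (1 + RtoC t * w)%C <> RtoC 0.
Proof.
  intros Ht E. pose proof (Re_1_plus_tw_pos t Ht). apply (f_equal fst) in E.
  unfold a in *. simpl in E. lra.
Qed.

Lemma log1p_corr_scal t : log1p_corr p (RtoC t * w)
  = csum (fun j => RtoC ((-1) ^ S j / INR (S j) * t ^ S j) * cpown w (S j))%C p.
Proof. apply csum_ext. intros k _. rewrite cpown_mult, cpown_RtoC, RtoC_mult. ring. Qed.

Lemma Re_log_primary_scal t : 0 <= t <= 1 -> fst (log_primary p (RtoC t * w)) = ReF t.
Proof.
  intros Ht. pose proof (Q_pos t Ht). unfold log_primary, ReF.
  rewrite fst_Cplus, log1p_corr_scal, fst_csum. f_equal.
  - unfold Clog. simpl fst. rewrite <- ln_sqrt by auto. unfold Cmod, Q, a, b. simpl. do 2 f_equal. ring.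
  - apply rsum_ext. intros k _. rewrite fst_RtoC_mult. field. apply not_0_INR; lia.
Qed.

Lemma Im_log_primary_scal t : 0 <= t <= 1 -> snd (log_primary p (RtoC t * w)) = ImF t.
Proof.
  intros Ht. pose proof (Re_1_plus_tw_pos t Ht). unfold log_primary, ImF.
  rewrite snd_Cplus, log1p_corr_scal, snd_csum. f_equal.
  - unfold Clog. simpl snd. rewrite Carg_Re_pos; unfold a, b in *; simpl; [f_equal; field|]; lra.
  - apply rsum_ext. intros k _. rewrite snd_RtoC_mult. field. apply not_0_INR; lia.
Qed.

Lemma is_derive_ReF t : 0 <= t <= 1 -> is_derive ReF t (fst (D t)).
Proof.
  intros Ht. pose proof (Q_pos t Ht) as HQ. unfold ReF.
  replace (fst (D t)) with ((2 * a * (1 + t * a) + 2 * b * (t * b)) / Q t / 2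
                           + rsum (fun k => ((-1) ^ S k * fst (cpown w (S k))) * t ^ k) p).
  - apply (is_derive_plus (K := R_AbsRing) (V := R_NormedModule)); [|apply is_derive_rsum_pow].
    unfold Q in *. auto_derive; [lra|]. field. lra.
  - unfold D. rewrite fst_Cplus, fst_csum. f_equal.
    + unfold Q in *. destruct w as [a0 b0]. unfold a, b in *. simpl in *. field. lra.
    + apply rsum_ext. intros k _. rewrite fst_RtoC_mult. ring.
Qed.

Lemma is_derive_ImF t : 0 <= t <= 1 -> is_derive ImF t (snd (D t)).
Proof.
  intros Ht. pose proof (Q_pos t Ht) as HQ. pose proof (Re_1_plus_tw_pos t Ht). unfold ImF.
  replace (snd (D t)) with (b / Q t
                           + rsum (fun k => ((-1) ^ S k * snd (cpown w (S k))) * t ^ k) p).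
  - apply (is_derive_plus (K := R_AbsRing) (V := R_NormedModule)); [|apply is_derive_rsum_pow].
    unfold Q in *. auto_derive; [lra|]. field. split; lra.
  - unfold D. rewrite snd_Cplus, snd_csum. f_equal.
    + unfold Q in *. destruct w as [a0 b0]. unfold a, b in *. simpl in *. field. lra.
    + apply rsum_ext. intros k _. rewrite snd_RtoC_mult. ring.
Qed.



Lemma Cmod_D_le t : 0 <= t <= 1 -> Cmod (D t) <= 2 * Cmod w ^ S p.
Proof.
  intros Ht. pose proof (one_plus_tw_neq0 t Ht) as Hnz. pose proof (Cmod_ge_0 w).
  unfold D. rewrite geometric_log_derivative by auto.
  assert (Hm : 1/2 <= Cmod (1 + RtoC t * w)%C).
  { assert (Htri : Cmod (RtoC 1) <= Cmod (1 + RtoC t * w)%C + Cmod (- (RtoC t * w))%C).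
    { replace (RtoC 1) with ((1 + RtoC t * w) + - (RtoC t * w))%C at 1 by ring.
      apply Cmod_triangle. }
    rewrite Cmod_opp, Cmod_mult, !Cmod_R, Rabs_R1, (Rabs_pos_eq t) in Htri by lra. nra. }
  rewrite Cmod_div, Cmod_mult, (Cmod_pow _ p : Cmod (cpown _ p) = _), Cmod_opp, Cmod_mult, Cmod_R,
    Rabs_pos_eq by (auto; lra).
  assert (Hle : (t * Cmod w) ^ p <= Cmod w ^ p) by (apply pow_incr; split; nra).
  assert (0 <= Cmod w ^ p) by (apply pow_le; auto).
  apply Rmult_le_reg_r with (Cmod (1 + RtoC t * w)%C); [lra|].
  unfold Rdiv. rewrite Rmult_assoc, Rinv_l by lra. simpl pow.
  assert (Cmod w * (t * Cmod w) ^ p <= Cmod w * Cmod w ^ p) by (apply Rmult_le_compat_l; auto).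
  assert (0 <= Cmod w * Cmod w ^ p) by (apply Rmult_le_pos; auto).
  nra.
Qed.

Lemma ReF_0 : ReF 0 = 0.
Proof.
  unfold ReF, Q. replace ((1 + 0 * a) ^ 2 + (0 * b) ^ 2) with 1 by ring. rewrite ln_1.
  rewrite (rsum_ext _ (fun _ => 0)), rsum_0; [lra|]. intros k _. rewrite pow_i by lia. ring.
Qed.

Lemma ImF_0 : ImF 0 = 0.
Proof.
  unfold ImF. replace (0 * b / (1 + 0 * a)) with 0 by (field; lra). rewrite atan_0.
  rewrite (rsum_ext _ (fun _ => 0)), rsum_0; [lra|]. intros k _. rewrite pow_i by lia. ring.
Qed.

Lemma Cmod_log_primary_le : Cmod (log_primary p w) <= 4 * Cmod w ^ S p.
Proof.
  assert (HB : forall v, 0 <= v <= 1 -> Cmod (D v) <= 2 * Cmod w ^ S p * v ^ 0).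
  { intros v Hv. rewrite pow_O, Rmult_1_r. apply Cmod_D_le; auto. }
  pose proof (mvt_bound_01 ReF (fun v => fst (D v)) _ 0 is_derive_ReF
                (fun v Hv => Rle_trans _ _ _ (re_le_Cmod _) (HB v Hv)) 1 ltac:(lra)) as HRe.
  pose proof (mvt_bound_01 ImF (fun v => snd (D v)) _ 0 is_derive_ImF
                (fun v Hv => Rle_trans _ _ _ (im_le_Cmod _) (HB v Hv)) 1 ltac:(lra)) as HIm.
  rewrite ReF_0, Rminus_0_r, pow1, Rmult_1_r in HRe.
  rewrite ImF_0, Rminus_0_r, pow1, Rmult_1_r in HIm.
  replace w with (RtoC 1 * w)%C by ring.
  eapply Rle_trans; [apply Cmod_le_Rabs_sum|].
  rewrite Re_log_primary_scal, Im_log_primary_scal by lra.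
  replace (RtoC 1 * w)%C with w by ring. lra.
Qed.

End LogPrimaryBound.

Definition ex_cseries (u : nat -> C) : Prop :=
  ex_series (fun n => fst (u n)) /\ ex_series (fun n => snd (u n)).

Lemma CSeries_ext u v : (forall n, u n = v n) -> CSeries u = CSeries v.
Proof. intros H. unfold CSeries. f_equal; apply Series_ext; intros; rewrite H; auto. Qed.

Lemma CSeries_0 : CSeries (fun _ => RtoC 0) = RtoC 0.
Proof.
  assert (Z : Series (fun _ : nat => 0) = 0).
  { rewrite (Series_ext _ (fun n : nat => 0 * 1)) by (intros; ring).
    rewrite (Series_scal_l 0 (fun _ => 1)). ring. }
  unfold CSeries. simpl. rewrite Z. reflexivity.
Qed.

Lemma ex_cseries_ext u v : (forall n, u n = v n) -> ex_cseries u -> ex_cseries v.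
Proof.
  intros H [H1 H2].
  split; [eapply (ex_series_ext (K := R_AbsRing) (V := R_NormedModule)); [|exact H1]
         |eapply (ex_series_ext (K := R_AbsRing) (V := R_NormedModule)); [|exact H2]];
    intros n; simpl; rewrite H; auto.
Qed.

Lemma ex_cseries_plus u v : ex_cseries u -> ex_cseries v -> ex_cseries (fun n => u n + v n)%C.
Proof.
  intros [H1 H2] [H3 H4].
  split; apply (ex_series_plus (K := R_AbsRing) (V := R_NormedModule)); auto.
Qed.

Lemma ex_cseries_scal (r : R) u : ex_cseries u -> ex_cseries (fun n => RtoC r * u n)%C.
Proof.
  intros [H1 H2]. split.
  - apply (ex_series_ext (K := R_AbsRing) (V := R_NormedModule) (fun n => r * fst (u n)));
      [intros; simpl; ring|apply (ex_series_scal_l (K := R_AbsRing) (V := R_NormedModule) r _ H1)].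
  - apply (ex_series_ext (K := R_AbsRing) (V := R_NormedModule) (fun n => r * snd (u n)));
      [intros; simpl; ring|apply (ex_series_scal_l (K := R_AbsRing) (V := R_NormedModule) r _ H2)].
Qed.

Lemma ex_cseries_minus u v : ex_cseries u -> ex_cseries v -> ex_cseries (fun n => u n - v n)%C.
Proof.
  intros Hu Hv. apply (ex_cseries_ext (fun n => u n + RtoC (-1) * v n)%C);
    [intros n; apply injective_projections; simpl; ring|].
  apply ex_cseries_plus, ex_cseries_scal; auto.
Qed.

Lemma CSeries_plus u v : ex_cseries u -> ex_cseries v ->
  CSeries (fun n => u n + v n)%C = (CSeries u + CSeries v)%C.
Proof.
  intros [H1 H2] [H3 H4]. unfold CSeries. apply injective_projections; simpl.
  - rewrite <- (Series_plus _ _ H1 H3). reflexivity.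
  - rewrite <- (Series_plus _ _ H2 H4). reflexivity.
Qed.

Lemma CSeries_scal (r : R) u : CSeries (fun n => RtoC r * u n)%C = (RtoC r * CSeries u)%C.
Proof.
  unfold CSeries. apply injective_projections; simpl.
  - rewrite <- Series_scal_l, Rmult_0_l, Rminus_0_r. apply Series_ext. intros; ring.
  - rewrite <- Series_scal_l, Rmult_0_l, Rplus_0_r. apply Series_ext. intros; ring.
Qed.

Lemma CSeries_minus u v : ex_cseries u -> ex_cseries v ->
  CSeries (fun n => u n - v n)%C = (CSeries u - CSeries v)%C.
Proof.
  intros Hu Hv.
  rewrite (CSeries_ext _ (fun n => u n + RtoC (-1) * v n)%C)
    by (intros; apply injective_projections; simpl; ring).
  rewrite CSeries_plus, CSeries_scal by (try apply ex_cseries_scal; auto).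
  apply injective_projections; simpl; ring.
Qed.

Lemma ex_series_eventually_le (a b : nat -> R) N :
  (forall n, (N <= n)%nat -> Rabs (a n) <= b n) -> ex_series b -> ex_series a.
Proof.
  intros H Hb. apply (ex_series_incr_n a N). apply (ex_series_incr_n b N) in Hb.
  eapply (ex_series_le (K := R_AbsRing) (V := R_CompleteNormedModule)); [|exact Hb].
  intros n. apply H. lia.
Qed.

Lemma Cmod_eventually_ge (Sq : nat -> C) p M :
  ex_series (fun n => / Cmod (Sq n) ^ S p) -> (forall n, Sq n <> RtoC 0) -> 0 < M ->
  exists N, forall n, (N <= n)%nat -> M <= Cmod (Sq n).
Proof.
  intros Hs Hnz HM. apply ex_series_lim_0, is_lim_seq_spec in Hs.
  assert (Hp : 0 < / M ^ S p) by (apply Rinv_0_lt_compat, pow_lt; auto).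
  destruct (Hs (mkposreal _ Hp)) as [N HN]. exists N. intros n Hn.
  specialize (HN n Hn). cbn [pos] in HN. rewrite Rminus_0_r in HN.
  pose proof (proj1 (Cmod_gt_0 _) (Hnz n)).
  assert (0 < Cmod (Sq n) ^ S p) by (apply pow_lt; auto).
  rewrite Rabs_pos_eq in HN by (apply Rlt_le, Rinv_0_lt_compat; auto).
  destruct (Rle_lt_dec M (Cmod (Sq n))) as [|Hlt]; auto. exfalso.
  assert (Cmod (Sq n) ^ S p <= M ^ S p) by (apply pow_incr; lra).
  assert (/ M ^ S p <= / Cmod (Sq n) ^ S p) by (apply Rinv_le_contravar; auto). lra.
Qed.

(* Once [|z / λ_n| <= 1/2] the terms are [O(|λ_n|^-(p+1))]. *)
Lemma ex_cseries_log_primary (Sq : nat -> C) p z :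
  (forall n, Sq n <> RtoC 0) -> ex_series (fun n => / Cmod (Sq n) ^ S p) ->
  ex_cseries (fun n => log_primary p (z / Sq n)).
Proof.
  intros Hnz Hs. pose proof (Cmod_ge_0 z).
  destruct (Cmod_eventually_ge Sq p (2 * Cmod z + 1) Hs Hnz) as [N HN]; [lra|].
  set (b := fun n => 4 * Cmod z ^ S p * / Cmod (Sq n) ^ S p).
  assert (Hb : forall n, (N <= n)%nat -> Cmod (log_primary p (z / Sq n)) <= b n).
  { intros n Hn. specialize (HN n Hn).
    assert (Hw : Cmod (z / Sq n)%C <= 1/2).
    { rewrite Cmod_div by auto. apply Rmult_le_reg_r with (Cmod (Sq n)); [lra|].
      unfold Rdiv. rewrite Rmult_assoc, Rinv_l by lra. lra. }
    eapply Rle_trans; [apply Cmod_log_primary_le; auto|].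
    unfold b. rewrite Cmod_div by auto. unfold Rdiv. rewrite Rpow_mult_distr, pow_inv. lra. }
  assert (Hbs : ex_series b)
    by exact (ex_series_scal_l (K := R_AbsRing) (V := R_NormedModule) (4 * Cmod z ^ S p) _ Hs).
  split; apply (ex_series_eventually_le _ b N); auto; intros n Hn;
    (eapply Rle_trans; [|apply Hb; auto]); [apply re_le_Cmod|apply im_le_Cmod].
Qed.

Lemma genus_eq Sq p : is_genus Sq p -> genus Sq = p.
Proof.
  intros Hp. unfold genus.
  destruct (epsilon_spec (inhabits O) (fun q => is_genus Sq q) (ex_intro _ p Hp)) as [H1 H2].
  destruct Hp as [H3 H4].
  destruct (Nat.lt_total (epsilon (inhabits O) (fun q => is_genus Sq q)) p) as [Hl|[E|Hl]]; auto.
  - exfalso. exact (H4 _ Hl H1).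
  - exfalso. exact (H2 _ Hl H3).
Qed.

Lemma ex_series_inv_pow_compare (Sa Sb : nat -> C) c q : 0 < c ->
  (forall n, Sa n <> RtoC 0) -> (forall n, c * Cmod (Sa n) <= Cmod (Sb n)) ->
  ex_series (fun n => / Cmod (Sa n) ^ q) -> ex_series (fun n => / Cmod (Sb n) ^ q).
Proof.
  intros Hc Hnz Hle Hs.
  eapply (ex_series_le (K := R_AbsRing) (V := R_CompleteNormedModule)).
  2: exact (ex_series_scal_l (K := R_AbsRing) (V := R_NormedModule) (/ c ^ q) _ Hs).
  intros n. change (Rabs (/ Cmod (Sb n) ^ q) <= / c ^ q * / Cmod (Sa n) ^ q).
  pose proof (proj1 (Cmod_gt_0 _) (Hnz n)). specialize (Hle n).
  rewrite <- Rinv_mult, <- Rpow_mult_distr.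
  rewrite Rabs_pos_eq by (apply Rlt_le, Rinv_0_lt_compat, pow_lt; nra).
  apply Rinv_le_contravar; [apply pow_lt; nra|apply pow_incr; nra].
Qed.

Lemma is_genus_compare (Sa Sb : nat -> C) c1 c2 p : 0 < c1 -> 0 < c2 ->
  (forall n, Sa n <> RtoC 0) ->
  (forall n, c1 * Cmod (Sa n) <= Cmod (Sb n) <= c2 * Cmod (Sa n)) ->
  is_genus Sa p -> is_genus Sb p.
Proof.
  intros Hc1 Hc2 Hnz Hle [Hconv Hdiv].
  assert (Hnzb : forall n, Sb n <> RtoC 0).
  { intros n. apply Cmod_gt_0. pose proof (proj1 (Cmod_gt_0 _) (Hnz n)).
    specialize (Hle n). nra. }
  split.
  - apply (ex_series_inv_pow_compare Sa Sb c1); auto. intros n; apply Hle.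
  - intros q Hq Hs. apply (Hdiv q Hq).
    apply (ex_series_inv_pow_compare Sb Sa (/ c2)); auto; [apply Rinv_0_lt_compat; auto|].
    intros n. apply Rmult_le_reg_l with c2; auto.
    rewrite <- Rmult_assoc, Rinv_r, Rmult_1_l by lra. apply Hle.
Qed.

Lemma Cmod_le_Cmod_plus_pos (l : R) (m : C) : 0 < l -> 0 <= fst m -> Cmod m <= Cmod (RtoC l + m)%C.
Proof.
  intros Hl Hm. unfold Cmod. apply sqrt_le_1_alt. simpl. pose proof (pow2_ge_0 (snd m)). nra.
Qed.

Lemma RtoC_pos_neq0 (l : R) : 0 < l -> RtoC l <> RtoC 0.
Proof. intros Hl E. apply (f_equal fst) in E. simpl in E. lra. Qed.

Lemma is_genus_Stilde (l : R) (S2 : nat -> C) p : 0 < l ->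
  (forall n, 0 < fst (S2 n)) -> (forall n, Cmod (S2 n) <= Cmod (S2 (S n))) ->
  is_genus S2 p -> is_genus (fun n => ((RtoC l + S2 n) / RtoC l)%C) p.
Proof.
  intros Hl Hre Hmono Hg.
  assert (Hnz : forall n, S2 n <> RtoC 0)
    by (intros n E; specialize (Hre n); rewrite E in Hre; simpl in Hre; lra).
  assert (Hm0 : forall n, Cmod (S2 O) <= Cmod (S2 n))
    by (induction n; [lra|eapply Rle_trans; eauto]).
  pose proof (proj1 (Cmod_gt_0 _) (Hnz O)).
  apply (is_genus_compare S2 _ (/ l) (/ Cmod (S2 O) + / l)); auto;
    [apply Rinv_0_lt_compat; auto
    |pose proof (Rinv_0_lt_compat _ Hl); pose proof (Rinv_0_lt_compat _ H); lra|].
  intros n. rewrite Cmod_div, Cmod_R, Rabs_pos_eq by (try apply RtoC_pos_neq0; lra).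
  pose proof (Cmod_le_Cmod_plus_pos l (S2 n) Hl (Rlt_le _ _ (Hre n))).
  assert (Cmod (RtoC l + S2 n)%C <= l + Cmod (S2 n)).
  { eapply Rle_trans; [apply Cmod_triangle|]. rewrite Cmod_R, Rabs_pos_eq; lra. }
  specialize (Hm0 n). unfold Rdiv. split.
  - rewrite Rmult_comm. apply Rmult_le_compat_r; [apply Rlt_le, Rinv_0_lt_compat|]; lra.
  - apply Rmult_le_reg_r with l; auto. rewrite Rmult_assoc, Rinv_l, Rmult_1_r by lra.
    replace ((/ Cmod (S2 O) + / l) * Cmod (S2 n) * l)
      with (l * (Cmod (S2 n) / Cmod (S2 O)) + Cmod (S2 n))
      by (field; lra).
    assert (1 <= Cmod (S2 n) / Cmod (S2 O)).
    { apply Rmult_le_reg_r with (Cmod (S2 O)); auto. unfold Rdiv.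
      rewrite Rmult_assoc, Rinv_l by lra. lra. }
    nra.
Qed.

Definition is_cpoly (q : nat) (f : R -> C) : Prop :=
  exists d : nat -> C, forall x, f x = csum (fun k => d k * RtoC (x ^ k))%C (S q).

Lemma is_cpoly_ext q f g : (forall x, f x = g x) -> is_cpoly q f -> is_cpoly q g.
Proof. intros E [d Hd]. exists d. intros x. rewrite <- E. auto. Qed.

Lemma is_cpoly_const q c : is_cpoly q (fun _ => c).
Proof.
  exists (fun k => if (k =? 0)%nat then c else RtoC 0). intros x.
  rewrite csum_succ_l, (csum_ext _ (fun _ => RtoC 0)), csum_0; [simpl; ring|].
  intros k _. simpl. ring.
Qed.

Lemma is_cpoly_le q q' f : (q <= q')%nat -> is_cpoly q f -> is_cpoly q' f.
Proof.
  intros Hq [d Hd]. exists (fun k => if (k <=? q)%nat then d k else RtoC 0).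
  intros x. rewrite Hd. clear Hd. induction Hq.
  - apply csum_ext. intros k Hk. replace (k <=? q)%nat with true; auto.
    symmetry; apply Nat.leb_le; lia.
  - rewrite IHHq. cbn [csum]. replace (S m <=? q)%nat with false; [ring|].
    symmetry; apply Nat.leb_gt; lia.
Qed.

Lemma is_cpoly_plus q f g : is_cpoly q f -> is_cpoly q g -> is_cpoly q (fun x => f x + g x)%C.
Proof.
  intros [d Hd] [e He]. exists (fun k => d k + e k)%C. intros x. rewrite Hd, He, <- csum_plus.
  apply csum_ext. intros; ring.
Qed.

Lemma is_cpoly_scal q c f : is_cpoly q f -> is_cpoly q (fun x => c * f x)%C.
Proof.
  intros [d Hd]. exists (fun k => c * d k)%C. intros x. rewrite Hd.
  generalize (S q). induction n; cbn [csum]; [ring|]. rewrite <- IHn. ring.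
Qed.

Lemma is_cpoly_mul_x q f : is_cpoly q f -> is_cpoly (S q) (fun x => RtoC x * f x)%C.
Proof.
  intros [d Hd]. exists (fun k => match k with O => RtoC 0 | S k' => d k' end). intros x.
  rewrite Hd, (csum_succ_l _ (S q)). simpl pow at 1.
  generalize (S q). induction n; cbn [csum]; [ring|].
  rewrite Cmult_plus_distr_l, IHn. simpl pow. rewrite RtoC_mult. ring.
Qed.

Lemma is_cpoly_csum q (f : nat -> R -> C) n :
  (forall k, (k < n)%nat -> is_cpoly q (f k)) -> is_cpoly q (fun x => csum (fun k => f k x) n).
Proof.
  intros H. induction n; cbn [csum]; [apply is_cpoly_const|].
  apply is_cpoly_plus; auto.
Qed.

Lemma is_cpoly_pow m : is_cpoly m (fun x => cpown (RtoC x) m).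
Proof.
  induction m; [exact (is_cpoly_const 0 (RtoC 1))|].
  apply (is_cpoly_mul_x m) in IHm. exact IHm.
Qed.

Lemma is_cpoly_pow_1p m : is_cpoly m (fun x => cpown (RtoC (1 + x)) m).
Proof.
  induction m; [exact (is_cpoly_const 0 (RtoC 1))|].
  apply (is_cpoly_ext _ (fun x => cpown (RtoC (1 + x)) m + RtoC x * cpown (RtoC (1 + x)) m)%C).
  - intros x. simpl cpown. rewrite RtoC_plus. ring.
  - apply is_cpoly_plus; [apply (is_cpoly_le m); auto|apply is_cpoly_mul_x; auto].
Qed.

Fixpoint pow_diff_quot (x0 x : R) (k : nat) : R :=
  match k with O => 0 | S j => x ^ j + x0 * pow_diff_quot x0 x j end.

Lemma pow_diff_quot_spec x0 x k : x ^ k - x0 ^ k = (x - x0) * pow_diff_quot x0 x k.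
Proof.
  induction k; simpl; [ring|].
  replace (x * x ^ k - x0 * x0 ^ k) with (x * x ^ k - x0 * x ^ k + x0 * (x ^ k - x0 ^ k)) by ring.
  rewrite IHk. ring.
Qed.

Lemma is_cpoly_pow_diff_quot x0 k : is_cpoly k (fun x => RtoC (pow_diff_quot x0 x (S k))).
Proof.
  induction k.
  - apply (is_cpoly_ext _ (fun _ => RtoC 1)); [intros; simpl; f_equal; ring|apply is_cpoly_const].
  - apply (is_cpoly_ext _ (fun x => cpown (RtoC x) (S k) + RtoC x0 * RtoC (pow_diff_quot x0 x (S k)))%C).
    + intros x. change (pow_diff_quot x0 x (S (S k))) with (x ^ S k + x0 * pow_diff_quot x0 x (S k)).
      rewrite cpown_RtoC, RtoC_plus, RtoC_mult. reflexivity.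
    + apply is_cpoly_plus; [apply is_cpoly_pow|]. apply is_cpoly_scal, (is_cpoly_le k); auto.
Qed.

Lemma is_cpoly_factor q f x0 : is_cpoly (S q) f ->
  exists g, is_cpoly q g /\ forall x, f x = (f x0 + (RtoC x - RtoC x0) * g x)%C.
Proof.
  intros [d Hd]. exists (fun x => csum (fun k => d k * RtoC (pow_diff_quot x0 x k))%C (S (S q))).
  split.
  - apply is_cpoly_csum. intros k Hk. apply is_cpoly_scal. destruct k as [|k].
    + exact (is_cpoly_const q (RtoC 0)).
    + apply (is_cpoly_le k); [lia|]. apply is_cpoly_pow_diff_quot.
  - intros x. rewrite !Hd. generalize (S (S q)). induction n; cbn [csum]; [ring|].
    rewrite IHn, <- RtoC_minus.
    replace (RtoC (x ^ n)) with (RtoC (x0 ^ n) + RtoC (x - x0) * RtoC (pow_diff_quot x0 x n))%C;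
      [ring|].
    rewrite <- RtoC_mult, <- pow_diff_quot_spec, <- RtoC_plus. f_equal. ring.
Qed.

Lemma has_const_log_coeffs_csum_pow_S (d : nat -> C) n :
  has_const_log_coeffs (fun x => csum (fun k => d k * RtoC (x ^ S k)) n)%C 0 0.
Proof.
  pose proof (has_const_log_coeffs_csum (fun k x => d k * RtoC (x ^ S k))%C
                (fun k => d k * 0)%C (fun k => d k * 0)%C n) as H.
  rewrite (csum_ext (fun k => d k * 0)%C (fun _ => RtoC 0)), csum_0 in H by (intros; ring).
  apply H. intros k. apply has_const_log_coeffs_scal, has_const_log_coeffs_pow_S.
Qed.

Lemma has_const_log_coeffs_cpoly q f : is_cpoly q f -> has_const_log_coeffs f (f 0) 0.
Proof.
  intros [d Hd].
  assert (E0 : f 0 = d O).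
  { rewrite Hd, csum_succ_l, (csum_ext _ (fun _ => RtoC 0)), csum_0; [simpl; ring|].
    intros k _. rewrite pow_i by lia. ring. }
  rewrite E0.
  pose proof (has_const_log_coeffs_plus _ _ _ _ _ _ (has_const_log_coeffs_const (d O))
                (has_const_log_coeffs_csum_pow_S (fun k => d (S k)) q)) as H.
  rewrite Cplus_0_r, Cplus_0_l in H.
  eapply (has_const_log_coeffs_ext _ _ _ _ 0); [|exact H].
  intros x _. rewrite Hd, csum_succ_l. simpl. ring.
Qed.

Lemma is_cpoly_factor_family q (f : nat -> R -> C) x0 : (forall n, is_cpoly (S q) (f n)) ->
  exists g : nat -> R -> C, (forall n, is_cpoly q (g n)) /\
    forall n x, f n x = (f n x0 + (RtoC x - RtoC x0) * g n x)%C.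
Proof.
  intros Hf.
  destruct (choice (fun n g => is_cpoly q g /\ forall x, f n x = (f n x0 + (RtoC x - RtoC x0) * g x)%C))
    as [g Hg]; [intros n; apply is_cpoly_factor, Hf|].
  exists g. split; intros n; apply Hg.
Qed.

(* Induction on the degree: the divided differences [(f_n x - f_n x0) / (x - x0)] form a
   convergent series of polynomials of lower degree. *)
Lemma cseries_is_cpoly q (f : nat -> R -> C) M :
  (forall n, is_cpoly q (f n)) -> (forall x, M < x -> ex_cseries (fun n => f n x)) ->
  exists P M', is_cpoly q P /\ forall x, M' < x -> CSeries (fun n => f n x) = P x.
Proof.
  revert f M. induction q as [|q IH]; intros f M Hf Hex.
  - exists (fun _ => CSeries (fun n => f n (M + 1))), M. split; [apply is_cpoly_const|].
    intros x Hx. apply CSeries_ext. intros n. destruct (Hf n) as [d Hd]. rewrite !Hd. simpl. ring.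
  - set (x0 := M + 1).
    destruct (is_cpoly_factor_family q f x0 Hf) as [g [Hg1 Hg2]].
    assert (Hgx : forall n x, x0 < x -> g n x = (RtoC (/ (x - x0)) * (f n x - f n x0))%C).
    { intros n x Hx. rewrite (Hg2 n x), <- RtoC_minus.
      replace (RtoC (/ (x - x0))) with (/ RtoC (x - x0))%C
        by (apply injective_projections; simpl; field; lra).
      field. apply RtoC_pos_neq0. lra. }
    assert (Hexg : forall x, x0 < x -> ex_cseries (fun n => g n x)).
    { intros x Hx. apply (ex_cseries_ext (fun n => RtoC (/ (x - x0)) * (f n x - f n x0))%C);
        [intros n; symmetry; apply Hgx; auto|].
      apply ex_cseries_scal, ex_cseries_minus; apply Hex; unfold x0 in *; lra. }
    destruct (IH g x0 Hg1 Hexg) as [P [M' [HP HM']]].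
    exists (fun x => CSeries (fun n => f n x0) + (RtoC x - RtoC x0) * P x)%C, (Rmax M' x0).
    split.
    + apply is_cpoly_plus; [apply is_cpoly_const|].
      apply (is_cpoly_ext _ (fun x => RtoC x * P x + RtoC (- x0) * P x)%C);
        [intros x; rewrite RtoC_opp; ring|].
      apply is_cpoly_plus; [apply is_cpoly_mul_x; auto|apply (is_cpoly_le q), is_cpoly_scal; auto].
    + intros x Hx. assert (x0 < x) by (eapply Rle_lt_trans; [apply Rmax_r|exact Hx]).
      assert (M' < x) by (eapply Rle_lt_trans; [apply Rmax_l|exact Hx]).
      rewrite (CSeries_ext _ (fun n => f n x0 + RtoC (x - x0) * g n x)%C)
        by (intros n; rewrite (Hg2 n x) at 1; rewrite RtoC_minus; reflexivity).
      rewrite CSeries_plus, CSeries_scal, HM', RtoC_minus; auto.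
      * apply Hex; unfold x0; lra.
      * apply ex_cseries_scal, Hexg; auto.
Qed.

(** * The shifted sequence *)

Lemma Re_one_plus_div_ge (r : R) (z : C) : 0 <= r -> 0 < fst z -> 1 <= fst (RtoC 1 + RtoC r / z)%C.
Proof.
  intros Hr Hz. destruct z as [a b]. simpl in *.
  assert (0 < a * (a * 1) + b * (b * 1)) by nra.
  assert (0 <= r * (a / (a * (a * 1) + b * (b * 1))))
    by (apply Rmult_le_pos; auto; apply Rdiv_le_0_compat; lra).
  lra.
Qed.

Section StildeDecomposition.
Variables (l : R) (S2 : nat -> C) (p : nat).
Hypothesis Hl : 0 < l.
Hypothesis Hre : forall n, 0 < fst (S2 n).
Hypothesis Hmono : forall n, Cmod (S2 n) <= Cmod (S2 (S n)).
Hypothesis Hg : is_genus S2 p.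

Let St := fun n => ((RtoC l + S2 n) / RtoC l)%C.

Lemma S2_neq0 n : S2 n <> RtoC 0.
Proof. intros E. specialize (Hre n). rewrite E in Hre. simpl in Hre. lra. Qed.

Lemma Re_St_pos n : 0 < fst (St n).
Proof.
  unfold St. replace ((RtoC l + S2 n) / RtoC l)%C with (RtoC (/ l) * (RtoC l + S2 n))%C
    by (rewrite RtoC_inv by lra; field; apply RtoC_pos_neq0; auto).
  rewrite fst_RtoC_mult. simpl.
  specialize (Hre n). apply Rmult_lt_0_compat; [apply Rinv_0_lt_compat|]; lra.
Qed.

Lemma St_neq0 n : St n <> RtoC 0.
Proof. intros E. pose proof (Re_St_pos n) as H. rewrite E in H. simpl in H. lra. Qed.

Lemma genus_S2 : genus S2 = p.
Proof. apply genus_eq; auto. Qed.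

Lemma genus_St : genus St = p.
Proof. apply genus_eq, is_genus_Stilde; auto. Qed.

(* [1 + l(1+x)/μ = (1 + l/μ)(1 + x/St)], all three factors lying in the right half-plane. *)
Lemma Clog_split x n : 0 <= x ->
  Clog (RtoC 1 + RtoC (l * (1 + x)) / S2 n)%C =
  (Clog (RtoC 1 + RtoC l / S2 n) + Clog (RtoC 1 + RtoC x / St n))%C.
Proof.
  intros Hx.
  assert (E : (RtoC 1 + RtoC (l * (1 + x)) / S2 n)%C =
              ((RtoC 1 + RtoC l / S2 n) * (RtoC 1 + RtoC x / St n))%C).
  { assert ((RtoC l + S2 n)%C <> RtoC 0)
      by (intros E; apply (f_equal fst) in E; simpl in E; specialize (Hre n); lra).
    unfold St. rewrite RtoC_mult, RtoC_plus. field.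
    repeat split; auto using S2_neq0, RtoC_pos_neq0. }
  rewrite E. apply Clog_mult_Re_pos.
  - pose proof (Re_one_plus_div_ge l (S2 n) (Rlt_le _ _ Hl) (Hre n)). lra.
  - pose proof (Re_one_plus_div_ge x (St n) Hx (Re_St_pos n)). lra.
  - rewrite <- E. pose proof (Re_one_plus_div_ge (l * (1 + x)) (S2 n) ltac:(nra) (Hre n)). lra.
Qed.

Definition log_primary_defect (n : nat) (x : R) : C :=
  (log1p_corr p (RtoC (l * (1 + x)) / S2 n) - log1p_corr p (RtoC l / S2 n)
   - log1p_corr p (RtoC x / St n))%C.

Lemma log_primary_split x n : 0 <= x ->
  log_primary p (RtoC x / St n) =
  (log_primary p (RtoC (l * (1 + x)) / S2 n) - log_primary p (RtoC l / S2 n)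
   - log_primary_defect n x)%C.
Proof. intros Hx. unfold log_primary, log_primary_defect. rewrite Clog_split by auto. ring. Qed.

Lemma ex_cseries_log_primary_S2 z : ex_cseries (fun n => log_primary p (z / S2 n)).
Proof. apply ex_cseries_log_primary; [apply S2_neq0|apply Hg]. Qed.

Lemma ex_cseries_log_primary_St z : ex_cseries (fun n => log_primary p (z / St n)).
Proof.
  apply ex_cseries_log_primary; [apply St_neq0|].
  apply (is_genus_Stilde l S2 p); auto.
Qed.

Lemma ex_cseries_log_primary_defect x : 0 <= x -> ex_cseries (fun n => log_primary_defect n x).
Proof.
  intros Hx.
  apply (ex_cseries_ext (fun n => log_primary p (RtoC (l * (1 + x)) / S2 n)
                                - log_primary p (RtoC l / S2 n) - log_primary p (RtoC x / St n))%C).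
  - intros n. rewrite log_primary_split by auto. ring.
  - repeat apply ex_cseries_minus; auto using ex_cseries_log_primary_S2, ex_cseries_log_primary_St.
Qed.

Lemma logGamma_Stilde_split x : 0 <= x ->
  logGamma (RtoC x) St =
  (logGamma (RtoC (l * (1 + x))) S2 - logGamma (RtoC l) S2
   + CSeries (fun n => log_primary_defect n x))%C.
Proof.
  intros Hx. rewrite !logGamma_log_primary, genus_S2, genus_St.
  rewrite (CSeries_ext _ (fun n => log_primary p (RtoC (l * (1 + x)) / S2 n)
                                   - log_primary p (RtoC l / S2 n) - log_primary_defect n x)%C)
    by (intros; apply log_primary_split; auto).
  rewrite !CSeries_minus; [ring| | | | ];
    auto using ex_cseries_log_primary_S2, ex_cseries_minus, ex_cseries_log_primary_defect.
Qed.

Lemma is_cpoly_log1p_corr m (h : R -> C) :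
  (forall j, (j < p)%nat -> is_cpoly m (fun x => cpown (h x) (S j))) ->
  is_cpoly m (fun x => log1p_corr p (h x)).
Proof. intros H. apply is_cpoly_csum. intros k Hk. apply is_cpoly_scal. auto. Qed.

Lemma is_cpoly_log_primary_defect n : is_cpoly p (log_primary_defect n).
Proof.
  unfold log_primary_defect. apply is_cpoly_plus; [apply is_cpoly_plus|].
  - apply is_cpoly_log1p_corr. intros j Hj.
    apply (is_cpoly_ext _ (fun x => cpown (RtoC l / S2 n) (S j) * cpown (RtoC (1 + x)) (S j))%C).
    + intros x. rewrite <- cpown_mult, RtoC_mult. f_equal. field. apply S2_neq0.
    + apply is_cpoly_scal, (is_cpoly_le (S j)); [lia|apply is_cpoly_pow_1p].
  - apply is_cpoly_const.
  - apply (is_cpoly_ext _ (fun x => RtoC (-1) * log1p_corr p (RtoC x / St n))%C);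
      [intros; apply injective_projections; simpl; ring|].
    apply is_cpoly_scal, is_cpoly_log1p_corr. intros j Hj.
    apply (is_cpoly_ext _ (fun x => cpown (/ St n) (S j) * cpown (RtoC x) (S j))%C).
    + intros x. rewrite <- cpown_mult. f_equal. field. apply St_neq0.
    + apply is_cpoly_scal, (is_cpoly_le (S j)); [lia|apply is_cpoly_pow].
Qed.

Lemma log_primary_defect_0 n : log_primary_defect n 0 = RtoC 0.
Proof.
  unfold log_primary_defect. replace (l * (1 + 0)) with l by ring.
  replace (RtoC 0 / St n)%C with (RtoC 0) by (field; apply St_neq0).
  assert (E : log1p_corr p (RtoC 0) = RtoC 0).
  { unfold log1p_corr. rewrite (csum_ext _ (fun _ => RtoC 0)); [apply csum_0|].
    intros k _. simpl. ring. }
  rewrite E. ring.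
Qed.

(* The defects are polynomials vanishing at [0], so their sum is [x] times a polynomial. *)
Lemma has_const_log_coeffs_defect_sum :
  has_const_log_coeffs (fun x => CSeries (fun n => log_primary_defect n x)) 0 0.
Proof.
  destruct (is_cpoly_factor_family p (fun n => log_primary_defect n) 0) as [E [HE1 HE2]].
  { intros n. apply (is_cpoly_le p); [lia|apply is_cpoly_log_primary_defect]. }
  assert (HxE : forall n x, log_primary_defect n x = (RtoC x * E n x)%C).
  { intros n x. rewrite HE2, log_primary_defect_0.
    replace (RtoC x - RtoC 0)%C with (RtoC x) by (apply injective_projections; simpl; ring). ring. }
  destruct (cseries_is_cpoly p E 0 HE1) as [P [M' [HP HM']]].
  { intros x Hx. apply (ex_cseries_ext (fun n => RtoC (/ x) * log_primary_defect n x)%C).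
    - intros n. rewrite HxE, Cmult_assoc, <- RtoC_mult, Rinv_l by lra. ring.
    - apply ex_cseries_scal, ex_cseries_log_primary_defect. lra. }
  pose proof (has_const_log_coeffs_cpoly _ _ (is_cpoly_mul_x _ _ HP)) as H.
  cbv beta in H. rewrite Cmult_0_l in H.
  eapply (has_const_log_coeffs_ext _ _ _ _ (Rmax M' 0)); [|exact H].
  intros x Hx. assert (M' < x) by (eapply Rle_lt_trans; [apply Rmax_l|exact Hx]).
  rewrite (CSeries_ext _ (fun n => RtoC x * E n x)%C) by (intros; apply HxE).
  rewrite CSeries_scal, HM' by auto. reflexivity.
Qed.

End StildeDecomposition.

(** * Constant and logarithmic coefficients *)

Definition expansion_coeffs (F : R -> C) : C * C :=
  epsilon (inhabits (RtoC 0, RtoC 0)) (fun c => has_const_log_coeffs F (fst c) (snd c)).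

Lemma expansion_coeffs_spec F : has_log_expansion F ->
  has_const_log_coeffs F (fst (expansion_coeffs F)) (snd (expansion_coeffs F)).
Proof.
  intros (c0 & c1 & H). unfold expansion_coeffs.
  apply (epsilon_spec _ (fun c => has_const_log_coeffs F (fst c) (snd c))). exists (c0, c1). exact H.
Qed.

Lemma expansion_coeffs_eq F c0 c1 : has_const_log_coeffs F c0 c1 -> expansion_coeffs F = (c0, c1).
Proof.
  intros H. pose proof (expansion_coeffs_spec F (ex_intro _ c0 (ex_intro _ c1 H))) as H'.
  destruct (has_const_log_coeffs_unique _ _ _ _ _ H' H) as [E0 E1].
  apply injective_projections; auto.
Qed.

Lemma coeff0_eq f c0 c1 : has_const_log_coeffs (fun x => f (RtoC (- x))) c0 c1 ->
  coeff0 f 0 = c0 /\ coeff0 f 1 = c1.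
Proof.
  intros H. unfold coeff0.
  set (e := epsilon _ (fun c : C * C => const_log_coeffs f (fst c) (snd c))).
  assert (He : const_log_coeffs f (fst e) (snd e)).
  { apply epsilon_spec. exists (c0, c1). apply const_log_coeffs_iff. exact H. }
  apply const_log_coeffs_iff in He. exact (has_const_log_coeffs_unique _ _ _ _ _ He H).
Qed.

(* The constant and logarithmic coefficients at infinity of [(1 + x)^a] and
   [(1 + x)^j ln (1 + x)]: the [b_{σ,0,k}] of [φ_σ] are read off from them. *)
Definition rpow_1p_coeffs (a : R) : C * C :=
  expansion_coeffs (fun x => RtoC (Rpower (1 + x) a)).

Definition pow_1p_ln_1p_coeffs (j : nat) : C * C :=
  expansion_coeffs (fun x => RtoC ((1 + x) ^ j * ln (1 + x))).

Lemma has_const_log_coeffs_rpow_1p a :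
  has_const_log_coeffs (fun x => RtoC (Rpower (1 + x) a))
    (fst (rpow_1p_coeffs a)) (snd (rpow_1p_coeffs a)).
Proof. apply expansion_coeffs_spec, has_log_expansion_rpow_1p. Qed.

Lemma has_const_log_coeffs_pow_1p_ln_1p j :
  has_const_log_coeffs (fun x => RtoC ((1 + x) ^ j * ln (1 + x)))
    (fst (pow_1p_ln_1p_coeffs j)) (snd (pow_1p_ln_1p_coeffs j)).
Proof. apply expansion_coeffs_spec, has_log_expansion_pow_1p_ln_1p. Qed.

Lemma rpow_1p_coeffs_neg a : a < 0 -> rpow_1p_coeffs a = (RtoC 0, RtoC 0).
Proof.
  intros Ha. apply expansion_coeffs_eq, has_const_log_coeffs_vanishing.
  apply (vanishes_at_infty_ext (fun x => RtoC (Rpower (1 * (1 + x)) a)) _ 0);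
    [intros; rewrite Rmult_1_l; reflexivity|].
  apply (vanishes_at_infty_comp_affine (fun y => RtoC (Rpower y a))); [lra|].
  apply vanishes_at_infty_rpow; auto.
Qed.

Lemma has_const_log_coeffs_pow_1p j : has_const_log_coeffs (fun x => RtoC ((1 + x) ^ j)) 1 0.
Proof.
  pose proof (has_const_log_coeffs_cpoly j _ (is_cpoly_pow_1p j)) as H.
  cbv beta in H. rewrite cpown_RtoC, Rplus_0_r, pow1 in H.
  eapply (has_const_log_coeffs_ext _ _ _ _ 0); [|exact H]. intros x _. apply cpown_RtoC.
Qed.

Lemma Cminus_0_r (z : C) : (z - RtoC 0)%C = z.
Proof. ring. Qed.

Lemma Copp_RtoC_opp y : (- RtoC (- y))%C = RtoC y.
Proof. apply injective_projections; simpl; ring. Qed.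

Lemma one_minus_RtoC_opp x : (RtoC 1 - RtoC (- x))%C = RtoC (1 + x).
Proof. apply injective_projections; simpl; ring. Qed.

Lemma coeff0_phi_tilde p0 alpha a0 K0 h :
  coeff0 (phi_tilde p0 alpha a0 K0 h) 0 = (a0 h * (fst (rpow_1p_coeffs (alpha h)) - 1))%C /\
  coeff0 (phi_tilde p0 alpha a0 K0 h) 1 = (a0 h * snd (rpow_1p_coeffs (alpha h)))%C.
Proof.
  apply coeff0_eq.
  pose proof (has_const_log_coeffs_minus _ _ _ _ _ _
    (has_const_log_coeffs_scal (a0 h) _ _ _
      (has_const_log_coeffs_minus _ _ _ _ _ _ (has_const_log_coeffs_rpow_1p (alpha h))
                                  (has_const_log_coeffs_const (RtoC 1))))
    (has_const_log_coeffs_csum_pow_S (fun k => K0 (S k) h) p0)) as H.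
  rewrite !Cminus_0_r in H.
  eapply (has_const_log_coeffs_ext _ _ _ _ 0); [|exact H].
  intros x Hx. cbv beta. unfold phi_tilde.
  rewrite one_minus_RtoC_opp, Cpow_RtoC_pos, Copp_RtoC_opp by lra. f_equal.
  apply csum_ext. intros k _. rewrite cpown_RtoC. reflexivity.
Qed.

Lemma coeff0_phi_hat p0 a1 K2 j :
  coeff0 (phi_hat p0 a1 K2 j) 0 = (a1 j * fst (pow_1p_ln_1p_coeffs j))%C /\
  coeff0 (phi_hat p0 a1 K2 j) 1 = (a1 j * snd (pow_1p_ln_1p_coeffs j))%C.
Proof.
  apply coeff0_eq.
  pose proof (has_const_log_coeffs_minus _ _ _ _ _ _
    (has_const_log_coeffs_scal (a1 j) _ _ _ (has_const_log_coeffs_pow_1p_ln_1p j))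
    (has_const_log_coeffs_csum_pow_S (fun k => K2 (S k) j) p0)) as H.
  rewrite !Cminus_0_r in H.
  eapply (has_const_log_coeffs_ext _ _ _ _ 0); [|exact H].
  intros x Hx. cbv beta. unfold phi_hat.
  rewrite one_minus_RtoC_opp, cpown_RtoC, Clog_RtoC_pos, Copp_RtoC_opp, RtoC_mult, Cmult_assoc
    by lra.
  f_equal. apply csum_ext. intros k _. rewrite cpown_RtoC. reflexivity.
Qed.

Lemma csum_tail_eq0 (f : nat -> C) ell N : (ell <= N)%nat ->
  (forall h, (ell < h <= N)%nat -> f h = RtoC 0) -> csum f (S N) = csum f (S ell).
Proof.
  intros Hle H. induction Hle as [|m Hm IH]; [reflexivity|].
  cbn [csum] in *. rewrite IH, (H (S m)) by (try intros; try apply H; lia). ring.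
Qed.

Section StildeCoeffs.
Variables (l : R) (S2 : nat -> C) (p N : nat) (alpha : nat -> R) (a0 a1 : nat -> C).
Hypothesis Hl : 0 < l.
Hypothesis Hre : forall n, 0 < fst (S2 n).
Hypothesis Hmono : forall n, Cmod (S2 n) <= Cmod (S2 (S n)).
Hypothesis Hg : is_genus S2 p.
Hypothesis Hasymp : vanishes_at_infty (fun y =>
  logGamma (RtoC y) S2 - csum (fun h => a0 h * RtoC (Rpower y (alpha h))) (S N)
  - csum (fun j => a1 j * RtoC (y ^ j * ln y)) (S p))%C.

Let St := fun n => ((RtoC l + S2 n) / RtoC l)%C.
Let T h := rpow_1p_coeffs (alpha h).
Let U j := pow_1p_ln_1p_coeffs j.

Lemma has_const_log_coeffs_power_part :
  has_const_log_coeffs (fun x => csum (fun h => a0 h * RtoC (Rpower (l * (1 + x)) (alpha h)))%C (S N))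
    (csum (fun h => a0 h * RtoC (Rpower l (alpha h)) * fst (T h))%C (S N))
    (csum (fun h => a0 h * RtoC (Rpower l (alpha h)) * snd (T h))%C (S N)).
Proof.
  eapply (has_const_log_coeffs_ext _ _ _ _ 0);
    [|apply has_const_log_coeffs_csum; intros h;
      apply (has_const_log_coeffs_scal (a0 h * RtoC (Rpower l (alpha h)))),
        has_const_log_coeffs_rpow_1p].
  intros x Hx. apply csum_ext. intros h _.
  rewrite <- Rpower_mult_distr, RtoC_mult by lra. ring.
Qed.

Lemma has_const_log_coeffs_log_part :
  has_const_log_coeffs
    (fun x => csum (fun j => a1 j * RtoC ((l * (1 + x)) ^ j * ln (l * (1 + x))))%C (S p))
    (csum (fun j => a1 j * RtoC (l ^ j) * (RtoC (ln l) + fst (U j)))%C (S p))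
    (csum (fun j => a1 j * RtoC (l ^ j) * snd (U j))%C (S p)).
Proof.
  assert (Hj : forall j, has_const_log_coeffs
    (fun x => a1 j * RtoC (l ^ j)
              * (RtoC (ln l) * RtoC ((1 + x) ^ j) + RtoC ((1 + x) ^ j * ln (1 + x))))%C
    (a1 j * RtoC (l ^ j) * (RtoC (ln l) + fst (U j)))%C (a1 j * RtoC (l ^ j) * snd (U j))%C).
  { intros j. pose proof (has_const_log_coeffs_scal (a1 j * RtoC (l ^ j)) _ _ _
      (has_const_log_coeffs_plus _ _ _ _ _ _
        (has_const_log_coeffs_scal (RtoC (ln l)) _ _ _ (has_const_log_coeffs_pow_1p j))
        (has_const_log_coeffs_pow_1p_ln_1p j))) as H.
    rewrite Cmult_1_r, Cmult_0_r, Cplus_0_l in H. exact H. }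
  eapply (has_const_log_coeffs_ext _ _ _ _ 0); [|apply has_const_log_coeffs_csum, Hj].
  intros x Hx. apply csum_ext. intros j _.
  rewrite ln_mult, Rpow_mult_distr by lra. rewrite !RtoC_mult, RtoC_plus. ring.
Qed.

Lemma has_const_log_coeffs_logGamma_Stilde :
  has_const_log_coeffs (fun x => logGamma (RtoC x) St)
    (csum (fun h => a0 h * RtoC (Rpower l (alpha h)) * fst (T h)) (S N)
     + csum (fun j => a1 j * RtoC (l ^ j) * (RtoC (ln l) + fst (U j))) (S p)
     - logGamma (RtoC l) S2)%C
    (csum (fun h => a0 h * RtoC (Rpower l (alpha h)) * snd (T h)) (S N)
     + csum (fun j => a1 j * RtoC (l ^ j) * snd (U j)) (S p))%C.
Proof.
  set (Rem := fun y => (logGamma (RtoC y) S2 - csum (fun h => a0 h * RtoC (Rpower y (alpha h))) (S N)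
                        - csum (fun j => a1 j * RtoC (y ^ j * ln y)) (S p))%C).
  pose proof (has_const_log_coeffs_plus _ _ _ _ _ _
    (has_const_log_coeffs_minus _ _ _ _ _ _
      (has_const_log_coeffs_plus _ _ _ _ _ _
        (has_const_log_coeffs_plus _ _ _ _ _ _
          has_const_log_coeffs_power_part has_const_log_coeffs_log_part)
        (has_const_log_coeffs_vanishing _ (vanishes_at_infty_comp_affine Rem l 1 Hl Hasymp)))
      (has_const_log_coeffs_const (logGamma (RtoC l) S2)))
    (has_const_log_coeffs_defect_sum l S2 p Hl Hre Hmono Hg)) as H.
  rewrite !Cplus_0_r, Cminus_0_r in H.
  eapply (has_const_log_coeffs_ext _ _ _ _ 0); [|exact H].
  intros x Hx. cbv beta. unfold Rem, St.
  rewrite (logGamma_Stilde_split l S2 p Hl Hre Hmono Hg x) by lra. ring.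
Qed.

Lemma coeff0_logGamma_Stilde :
  coeff0 (fun lam => logGamma (- lam)%C St) 0 =
    (csum (fun h => a0 h * RtoC (Rpower l (alpha h)) * fst (T h)) (S N)
     + csum (fun j => a1 j * RtoC (l ^ j) * (RtoC (ln l) + fst (U j))) (S p)
     - logGamma (RtoC l) S2)%C /\
  coeff0 (fun lam => logGamma (- lam)%C St) 1 =
    (csum (fun h => a0 h * RtoC (Rpower l (alpha h)) * snd (T h)) (S N)
     + csum (fun j => a1 j * RtoC (l ^ j) * snd (U j)) (S p))%C.
Proof.
  apply coeff0_eq.
  eapply (has_const_log_coeffs_ext _ _ _ _ 0); [|exact has_const_log_coeffs_logGamma_Stilde].
  intros x _. cbv beta. rewrite Copp_RtoC_opp. reflexivity.
Qed.

Variables (ell p0 : nat) (K0 K2 : nat -> nat -> C).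
Hypothesis Hell : (ell <= N)%nat.
Hypothesis Htail : forall h, (ell < h <= N)%nat -> alpha h < 0.

Lemma csum_T_tail (f : nat -> C) (proj : C * C -> C) : proj (RtoC 0, RtoC 0) = RtoC 0 ->
  csum (fun h => f h * proj (T h))%C (S N) = csum (fun h => f h * proj (T h))%C (S ell).
Proof.
  intros H0. apply csum_tail_eq0; auto.
  intros h Hh. unfold T. rewrite rpow_1p_coeffs_neg, H0 by (apply Htail; auto). ring.
Qed.

Lemma A0_summand_log :
  (coeff0 (fun lam => logGamma (- lam)%C St) 1
   - csum (fun h => coeff0 (phi_tilde p0 alpha a0 K0 h) 1 * RtoC (Rpower l (alpha h))) (S ell)
   - csum (fun j => coeff0 (phi_hat p0 a1 K2 j) 1 * RtoC (l ^ j)) (S p))%C = RtoC 0.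
Proof.
  rewrite (proj2 coeff0_logGamma_Stilde), (csum_T_tail _ snd) by reflexivity.
  rewrite (csum_ext (fun h => coeff0 (phi_tilde p0 alpha a0 K0 h) 1 * RtoC (Rpower l (alpha h)))%C
                    (fun h => a0 h * RtoC (Rpower l (alpha h)) * snd (T h))%C)
    by (intros h _; rewrite (proj2 (coeff0_phi_tilde _ _ _ _ h)); unfold T; ring).
  rewrite (csum_ext (fun j => coeff0 (phi_hat p0 a1 K2 j) 1 * RtoC (l ^ j))%C
                    (fun j => a1 j * RtoC (l ^ j) * snd (U j))%C)
    by (intros j _; rewrite (proj2 (coeff0_phi_hat _ _ _ j)); unfold U; ring).
  ring.
Qed.

Lemma A0_summand_const :
  (coeff0 (fun lam => logGamma (- lam)%C St) 0
   - csum (fun h => coeff0 (phi_tilde p0 alpha a0 K0 h) 0 * RtoC (Rpower l (alpha h))) (S ell)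
   - csum (fun j => coeff0 (phi_hat p0 a1 K2 j) 0 * RtoC (l ^ j)) (S p))%C =
  (- logGamma (RtoC l) S2 + csum (fun j => a1 j * RtoC (l ^ j * ln l)) (S p)
   + csum (fun h => a0 h * RtoC (Rpower l (alpha h))) (S ell))%C.
Proof.
  rewrite (proj1 coeff0_logGamma_Stilde), (csum_T_tail _ fst) by reflexivity.
  rewrite (csum_ext (fun h => coeff0 (phi_tilde p0 alpha a0 K0 h) 0 * RtoC (Rpower l (alpha h)))%C
                    (fun h => a0 h * RtoC (Rpower l (alpha h)) * fst (T h)
                              - a0 h * RtoC (Rpower l (alpha h)))%C)
    by (intros h _; rewrite (proj1 (coeff0_phi_tilde _ _ _ _ h)); unfold T; ring).
  rewrite (csum_ext (fun j => coeff0 (phi_hat p0 a1 K2 j) 0 * RtoC (l ^ j))%C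
                    (fun j => a1 j * RtoC (l ^ j) * (RtoC (ln l) + fst (U j))
                              - a1 j * RtoC (l ^ j * ln l))%C)
    by (intros j _; rewrite (proj1 (coeff0_phi_hat _ _ _ j)), RtoC_mult; unfold U; ring).
  rewrite !csum_minus. ring.
Qed.

End StildeCoeffs.

Lemma TR_spectral_type_Re_pos Sq s p N alpha a0 a1 :
  TR_spectral_type Sq s p N alpha a0 a1 -> forall n, 0 < fst (Sq n).
Proof.
  intros (_ & _ & _ & _ & _ & theta & c & Htc & Hc & Hsec & _) n.
  pose proof (in_sector_Re_ge theta c (Sq n) Htc (Hsec n)). lra.
Qed.

(* On the negative real axis [λ = -y] the expansion holds, with an [o(1)] error since [α_N <= 0]. *)
Lemma TR_spectral_type_remainder Sq s p N alpha a0 a1 :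
  TR_spectral_type Sq s p N alpha a0 a1 -> alpha N <= 0 ->
  vanishes_at_infty (fun y =>
    logGamma (RtoC y) Sq - csum (fun h => a0 h * RtoC (Rpower y (alpha h))) (S N)
    - csum (fun j => a1 j * RtoC (y ^ j * ln y)) (S p))%C.
Proof.
  intros (_ & _ & _ & _ & _ & theta & c & Htc & Hc & _ & Hexp) HN eps He.
  destruct (Hexp (eps / 2)) as [R0 HR0]; [lra|].
  exists (Rmax R0 1). intros y Hy.
  assert (HR0y : R0 < y) by (eapply Rle_lt_trans; [apply Rmax_l|exact Hy]).
  assert (Hy1 : 1 < y) by (eapply Rle_lt_trans; [apply Rmax_r|exact Hy]).
  specialize (HR0 (RtoC (- y)) (not_in_sector_neg theta c y Htc Hc ltac:(lra))).
  rewrite Cmod_R, Rabs_left, Ropp_involutive, !Copp_RtoC_opp in HR0 by lra.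
  specialize (HR0 HR0y).
  rewrite (csum_ext (fun h => a0 h * Defs.Cpow (RtoC y) (alpha h))%C
                    (fun h => a0 h * RtoC (Rpower y (alpha h)))%C),
          (csum_ext (fun j => a1 j * cpown (RtoC y) j * Clog (RtoC y))%C
                    (fun j => a1 j * RtoC (y ^ j * ln y)%R)%C) in HR0.
  - assert (Rpower y (alpha N) <= 1).
    { rewrite <- (Rpower_O y) by lra. apply Rle_Rpower; lra. }
    assert (0 < Rpower y (alpha N)) by (unfold Rpower; apply exp_pos). nra.
  - intros j _. rewrite cpown_RtoC, Clog_RtoC_pos, RtoC_mult by lra. ring.
  - intros h _. rewrite Cpow_RtoC_pos by lra. reflexivity.
Qed.

Lemma conv_exp_nonneg (Sq : nat -> C) s :
  (forall n, Sq n <> RtoC 0) -> (forall n, Cmod (Sq n) <= Cmod (Sq (S n))) ->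
  is_conv_exp Sq s -> 0 <= s.
Proof.
  intros Hnz Hmono [Hconv _]. destruct (Rle_lt_dec 0 s) as [|Hs]; auto. exfalso.
  specialize (Hconv (s / 2) ltac:(lra)). apply ex_series_lim_0, is_lim_seq_spec in Hconv.
  assert (Hm0 : forall n, Cmod (Sq O) <= Cmod (Sq n)) by (induction n; [lra|eapply Rle_trans; eauto]).
  pose proof (proj1 (Cmod_gt_0 _) (Hnz O)).
  assert (Hq : 0 < Rpower (Cmod (Sq O)) (- (s / 2))) by (unfold Rpower; apply exp_pos).
  destruct (Hconv (mkposreal _ Hq)) as [N HN]. specialize (HN N (le_n N)). cbn [pos] in HN.
  rewrite Rminus_0_r, Rabs_pos_eq in HN by (unfold Rpower; apply Rlt_le, exp_pos).
  assert (Rpower (Cmod (Sq O)) (- (s / 2)) <= Rpower (Cmod (Sq N)) (- (s / 2)))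
    by (apply Rle_Rpower_l; [lra|split; auto]).
  lra.
Qed.

Theorem mainTheorem11
  (lam1 : nat -> R) (S2 : nat -> C)
  (s1 s2 : R) (p1 p2 N1 N2 : nat)
  (alpha1 alpha2 : nat -> R) (a10 a11 a20 a21 : nat -> C)
  (ell : nat) (K0 K2 : nat -> nat -> C)
  (Hpos : forall n, 0 < lam1 n)
  (HS1 : TR_spectral_type (fun n => RtoC (lam1 n)) s1 p1 N1 alpha1 a10 a11)
  (HS2 : TR_spectral_type S2 s2 p2 N2 alpha2 a20 a21)
  (HN1 : alpha1 N1 <= 0) (HN2 : alpha2 N2 <= 0)
  (Hord1 : alpha1 N1 < - INR p2 - 1)
  (Hord2 : - alpha2 N2 >= s1)
  (Hell1 : (ell <= N2)%nat) (Hell2 : - alpha2 ell <= s1)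
  (Hell3 : forall h, (ell < h <= N2)%nat -> s1 < - alpha2 h) :
  let p0 := Z.to_nat (Int_part (s1 + s2)) in
  (forall s : C, A0 lam1 S2 p0 p2 ell alpha2 a20 a21 K0 K2 1 s = RtoC 0) /\
  (forall s : C,
     A0 lam1 S2 p0 p2 ell alpha2 a20 a21 K0 K2 0 s =
     CSeries (fun n1 =>
       (- logGamma (RtoC (lam1 n1)) S2
        + csum (fun j => a21 j * RtoC (lam1 n1 ^ j * ln (lam1 n1))) (S p2)
        + csum (fun h => a20 h * RtoC (Rpower (lam1 n1) (alpha2 h))) (S ell))
       * Rpow_C (lam1 n1) (- s))%C).
Proof.
  intros p0.
  pose proof (TR_spectral_type_remainder _ _ _ _ _ _ _ HS2 HN2) as Hasymp.
  pose proof (TR_spectral_type_Re_pos _ _ _ _ _ _ _ HS2) as Hre.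
  destruct HS2 as (_ & Hmono2 & _ & Hgen2 & _).
  destruct HS1 as (Hnz1 & Hmono1 & Hconv1 & _).
  assert (Htail : forall h, (ell < h <= N2)%nat -> alpha2 h < 0).
  { pose proof (conv_exp_nonneg _ _ Hnz1 Hmono1 Hconv1). intros h Hh.
    specialize (Hell3 h Hh). lra. }
  split; intros s; unfold A0.
  - rewrite <- CSeries_0. apply CSeries_ext. intros n1.
    transitivity (RtoC 0 * Rpow_C (lam1 n1) (- s))%C; [f_equal|ring].
    exact (A0_summand_log (lam1 n1) S2 p2 N2 alpha2 a20 a21 (Hpos n1) Hre Hmono2 Hgen2 Hasymp
                          ell p0 K0 K2 Hell1 Htail).
  - apply CSeries_ext. intros n1. f_equal.
    exact (A0_summand_const (lam1 n1) S2 p2 N2 alpha2 a20 a21 (Hpos n1) Hre Hmono2 Hgen2 Hasymp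
                            ell p0 K0 K2 Hell1 Htail).
Qed.
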